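(* Let $N\geq 0$ be an integer and $s_N(x)=\sum_{j=0}^{N-1}\frac{|E_{2j}|}{(2j)!}x^{2j}$. Then for all $0<x<\pi/2$, \[ \frac{|E_{2N}|}{(2N)!}x^{2N-1}\tan x<\sec x-s_N(x)<\left(\frac{2}{\pi}\right)^{2N-1}x^{2N-1}\tan x, \] where the constants $|E_{2N}|/(2N)!$ and $(2/\pi)^{2N-1}$ are the best possible.
   Context: The Euler numbers $E_n$ are defined by $\sec t=\sum_{n=0}^\infty E_n\frac{t^n}{n!}$ for $|t|<\pi$. An empty sum is understood to be zero. *)

From Stdlib Require Import Reals Lra Lia ZArith.
Open Scope R_scope.

Definition sec (t : R) : R := / cos t.

(* E is a sequence of Euler numbers: sec t = sum_n E n t^n / n! near 0.
   The Maclaurin series of sec has radius pi/2, so we require the identity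
   on |t| < pi/2 (this determines E uniquely). *)
Definition is_Euler_seq (E : nat -> R) : Prop :=
  forall t : R, Rabs t < PI / 2 ->
    infinite_sum (fun n => E n * t ^ n / INR (fact n)) (sec t).

Fixpoint s_part (E : nat -> R) (N : nat) (x : R) : R :=
  match N with
  | O => 0
  | S M => s_part E M x + Rabs (E (2 * M)%nat) / INR (fact (2 * M)) * x ^ (2 * M)
  end.

(* The proof runs through partial fractions.  Herglotz's trick (a continuous function on
   [0, 1] satisfying f(x/2) + f((x+1)/2) = 2 f(x), vanishing at 0 and 1 and O(x) near 0,
   vanishes identically) gives  pi cot(pi x) = 1/x + sum_{k>=1} (1/(x+k) + 1/(x-k)),  hence,
   with mu_k = (2k+1) pi/2,
     tan x / x = sum_k 2 / (mu_k^2 - x^2),   sec x = sum_k (-1)^k 2 mu_k / (mu_k^2 - x^2).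
   Expanding 1/(mu_k^2 - x^2) geometrically yields
     sec x = sum_{j<N} A_j x^(2j) + x^(2N) Q_N(x),   A_j = sum_k (-1)^k 2 / mu_k^(2j+1),
   and uniqueness of Taylor coefficients identifies A_j = |E_2j| / (2j)!.  The theorem then
   compares Q_N(x) = sum_k (-1)^k 2 / (mu_k^(2N-1) (mu_k^2 - x^2)) with multiples of
   tan x / x.  For N >= 1 the upper constant mu_0^(1-2N) works termwise.  For the lower
   constant write Q_N = A_N + x^2 Q_(N+1) and tan x / x = 1 + x^2 sum_k 2 / (mu_k^2 (mu_k^2 - x^2))
   (using sum_k 2 / mu_k^2 = 1); the difference is an Abel sum with decreasing weights
   1 / (mu_k^2 - x^2) of a sequence summing to 0 that is nonpositive after its first term.
   For N = 0 the two bounds are sin x < x and Jordan's inequality.  Both constants are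
   approached as x -> 0 and x -> pi/2 respectively. *)

From Stdlib Require Import Reals ZArith Lra Lia.
From Coquelicot Require Import Coquelicot.
Open Scope R_scope.

(* Coquelicot states series identities in its algebraic hierarchy; [field] needs the
   equality at type [R]. *)
Ltac change_eq_R := match goal with |- ?a = ?b => change (@eq R a b) end.

(** * Sequences, series and power series *)

Lemma PI_bounds : 3 < PI <= 4.
Proof. pose proof PI2_3_2. pose proof PI_4. lra. Qed.

Lemma exists_INR_gt (A : R) : exists n : nat, A < INR n.
Proof. destruct (INR_archimed 1 A) as [n Hn]; [lra|]. exists n. lra. Qed.

Lemma INR_lt_pow2 (n : nat) : INR n < 2 ^ n.
Proof.
  induction n as [|n IH]; [simpl; lra|].
  rewrite S_INR. simpl. pose proof (pow_R1_Rle 2 n ltac:(lra)). lra.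
Qed.

Lemma pow_lt_compat_l (a b : R) (n : nat) : 0 <= a < b -> (0 < n)%nat -> a ^ n < b ^ n.
Proof.
  intros Hab Hn. destruct n as [|n]; [lia|]. clear Hn.
  induction n as [|n IH]; [simpl; lra|].
  change (a ^ S (S n)) with (a * a ^ S n). change (b ^ S (S n)) with (b * b ^ S n).
  pose proof (pow_le a (S n) (proj1 Hab)). nra.
Qed.

Lemma neg1_pow_mul_le (k : nat) (r : R) : 0 <= r -> (-1) ^ k * r <= r.
Proof.
  intros Hr. destruct (Nat.Even_or_Odd k) as [[m ->]|[m ->]].
  - rewrite pow_1_even. lra.
  - rewrite Nat.add_1_r, pow_1_odd. lra.
Qed.

Lemma Rabs_inv_sub_le (a b c : R) : 0 < c -> c <= a * b -> Rabs (/ a - / b) <= Rabs (a - b) / c.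
Proof.
  intros Hc Hab.
  assert (Ha : a <> 0) by (intro; subst; nra).
  assert (Hb : b <> 0) by (intro; subst; nra).
  replace (/ a - / b) with ((b - a) / (a * b)) by (field; auto).
  unfold Rdiv. rewrite Rabs_mult, Rabs_inv, (Rabs_right (a * b)) by lra.
  rewrite <- Rabs_Ropp. replace (- (b - a)) with (a - b) by ring.
  apply Rmult_le_compat_l; [apply Rabs_pos|]. apply Rinv_le_contravar; lra.
Qed.

Lemma eq_of_Rabs_sub_le_lin (a b C : R) : (forall t, 0 < t <= 1 -> Rabs (a - b) <= C * t) -> a = b.
Proof.
  intros H. destruct (Req_dec a b) as [|Hne]; [assumption|]. exfalso.
  set (e := Rabs (a - b)). assert (He : 0 < e) by (apply Rabs_pos_lt; lra).
  set (K := Rabs C + 1). assert (HK : 0 < K) by (unfold K; pose proof (Rabs_pos C); lra).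
  set (t := Rmin 1 (e / (2 * K))).
  assert (Ht : 0 < t <= 1)
    by (split; [apply Rmin_pos; [lra | apply Rdiv_lt_0_compat; lra] | apply Rmin_l]).
  assert (HtK : K * t <= e / 2).
  { apply Rle_trans with (K * (e / (2 * K))); [apply Rmult_le_compat_l; [lra | apply Rmin_r]|].
    right. field. lra. }
  pose proof (H t Ht) as Hb. fold e in Hb.
  assert (C * t <= K * t) by (unfold K; pose proof (RRle_abs C); nra).
  lra.
Qed.

Lemma powerRZ_pred (x : R) (n : nat) : x <> 0 -> powerRZ x (Z.of_nat n - 1) = x ^ n / x.
Proof.
  intros Hx. unfold Z.sub. rewrite powerRZ_add, <- pow_powerRZ by exact Hx. simpl. field. exact Hx.
Qed.

Lemma is_lim_seq_inv_INR_plus (a : R) : is_lim_seq (fun n => / (INR n + a)) 0.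
Proof.
  assert (H : is_lim_seq (fun n => INR n + a) p_infty).
  { eapply is_lim_seq_plus; [apply is_lim_seq_INR | apply is_lim_seq_const | constructor]. }
  pose proof (is_lim_seq_inv _ _ H) as H2. simpl in H2. apply H2. discriminate.
Qed.

Lemma is_lim_seq_inv_double_plus (a : R) : is_lim_seq (fun n => / (2 * INR n + a)) 0.
Proof.
  apply (is_lim_seq_ext (fun n => / 2 * / (INR n + a / 2))).
  { intros n. rewrite <- Rinv_mult. f_equal. field. }
  replace (Finite 0) with (Finite (/ 2 * 0)) by (f_equal; ring).
  apply (is_lim_seq_scal_l _ (/ 2) 0), is_lim_seq_inv_INR_plus.
Qed.

Lemma is_lim_seq_Rabs_le (u : nat -> R) (l C : R) :
  is_lim_seq u l -> (forall n, Rabs (u n) <= C) -> Rabs l <= C.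
Proof.
  intros Hl Hb. pose proof (is_lim_seq_abs _ _ Hl) as Ha.
  exact (is_lim_seq_le _ _ _ _ Hb Ha (is_lim_seq_const C)).
Qed.

Lemma is_lim_seq_even_odd (u : nat -> R) (l : R) :
  is_lim_seq (fun n => u (2 * n)%nat) l -> is_lim_seq (fun n => u (S (2 * n))) l ->
  is_lim_seq u l.
Proof.
  intros He Ho. apply is_lim_seq_Reals. apply is_lim_seq_Reals in He, Ho.
  intros eps Heps. destruct (He eps Heps) as [N1 H1]. destruct (Ho eps Heps) as [N2 H2].
  exists (2 * (N1 + N2))%nat. intros n Hn.
  destruct (Nat.Even_or_Odd n) as [[m Hm]|[m Hm]]; subst n.
  - apply H1. lia.
  - replace (2 * m + 1)%nat with (S (2 * m)) by lia. apply H2. lia.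
Qed.

Lemma continuity_pt_lipschitz (F : R -> R) (x0 d K : R) : 0 < d ->
  (forall x, Rabs (x - x0) < d -> Rabs (F x - F x0) <= K * Rabs (x - x0)) ->
  continuity_pt F x0.
Proof.
  intros Hd HK eps Heps. simpl. unfold R_dist.
  set (K' := Rabs K + 1).
  assert (HK' : 0 < K') by (unfold K'; pose proof (Rabs_pos K); lra).
  exists (Rmin d (eps / K')). split.
  - apply Rmin_pos; [lra|]. apply Rdiv_lt_0_compat; lra.
  - intros x [_ Hx].
    assert (Hx1 : Rabs (x - x0) < d) by (eapply Rlt_le_trans; [apply Hx | apply Rmin_l]).
    assert (Hx2 : Rabs (x - x0) < eps / K') by (eapply Rlt_le_trans; [apply Hx | apply Rmin_r]).
    eapply Rle_lt_trans; [apply HK, Hx1|].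
    apply Rle_lt_trans with (K' * Rabs (x - x0)).
    + apply Rmult_le_compat_r; [apply Rabs_pos|]. unfold K'. pose proof (RRle_abs K). lra.
    + replace eps with (K' * (eps / K')) by (field; lra). apply Rmult_lt_compat_l; lra.
Qed.

Lemma is_series_lincomb (a b : nat -> R) (la lb c1 c2 : R) :
  is_series a la -> is_series b lb -> is_series (fun k => c1 * a k + c2 * b k) (c1 * la + c2 * lb).
Proof.
  intros Ha Hb.
  exact (is_series_plus _ _ _ _ (is_series_scal_l c1 a la Ha) (is_series_scal_l c2 b lb Hb)).
Qed.

Lemma ex_series_lincomb (a b : nat -> R) (c1 c2 : R) :
  ex_series a -> ex_series b -> ex_series (fun k => c1 * a k + c2 * b k).
Proof.
  intros [la Ha] [lb Hb]. exists (c1 * la + c2 * lb). apply is_series_lincomb; assumption.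
Qed.

Lemma is_series_pairs_ge (a : nat -> R) (L : R) : is_series a L ->
  (forall m, 0 <= a (2 * m)%nat + a (S (2 * m))) -> a 0%nat + a 1%nat <= L.
Proof.
  intros HL Hp.
  assert (Hs : forall m, a 0%nat + a 1%nat <= sum_n a (S (2 * m))).
  { induction m as [|m IH].
    - rewrite sum_Sn, sum_O. apply Rle_refl.
    - replace (S (2 * S m)) with (S (S (S (2 * m)))) by lia. rewrite 2!sum_Sn.
      pose proof (Hp (S m)) as Hm. replace (2 * S m)%nat with (S (S (2 * m))) in Hm by lia.
      change plus with Rplus. lra. }
  assert (Hl : is_lim_seq (fun m => sum_n a (S (2 * m))) L).
  { apply (is_lim_seq_subseq (sum_n a) L (fun m => S (2 * m))); [|exact HL].
    apply eventually_subseq. intros; lia. }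
  exact (is_lim_seq_le _ _ _ _ Hs (is_lim_seq_const _) Hl).
Qed.

Lemma is_series_nonneg (a : nat -> R) (L : R) : is_series a L -> (forall k, 0 <= a k) -> 0 <= L.
Proof.
  intros HL Hp. pose proof (Hp 0%nat). pose proof (Hp 1%nat).
  assert (a 0%nat + a 1%nat <= L); [|lra].
  apply (is_series_pairs_ge _ _ HL). intros m.
  pose proof (Hp (2 * m)%nat). pose proof (Hp (S (2 * m))). lra.
Qed.

Lemma is_series_pos (a : nat -> R) (L : R) : is_series a L ->
  (forall k, 0 <= a k) -> 0 < a 1%nat -> 0 < L.
Proof.
  intros HL Hp H1. pose proof (Hp 0%nat).
  assert (a 0%nat + a 1%nat <= L); [|lra].
  apply (is_series_pairs_ge _ _ HL). intros m.
  pose proof (Hp (2 * m)%nat). pose proof (Hp (S (2 * m))). lra.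
Qed.

(* Abel summation in its simplest form: shifting every weight to [w 0] costs nothing
   since [sum v = 0], and afterwards every term is nonnegative. *)
Lemma is_series_weighted_pos (v w : nat -> R) (l : R) :
  is_series v 0 -> is_series (fun k => v k * w k) l ->
  (forall k, (1 <= k)%nat -> v k <= 0 /\ w k <= w 0%nat) -> v 1%nat < 0 -> w 1%nat < w 0%nat ->
  0 < l.
Proof.
  intros Hv Hvw Hmono Hv1 Hw1.
  pose proof (is_series_lincomb _ _ _ _ 1 (- w 0%nat) Hvw Hv) as H.
  replace l with (1 * l + - w 0%nat * 0) by ring.
  apply (is_series_pos _ _ H).
  - intros [|k]; [lra|]. destruct (Hmono (S k) ltac:(lia)). nra.
  - nra.
Qed.

Definition tel (k : nat) : R := / ((INR k + 1) * (INR k + 2)).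

Lemma is_series_tel : is_series tel 1.
Proof.
  assert (Hsum : forall n, sum_n tel n = 1 - / (INR n + 2)).
  { induction n as [|n IH].
    - rewrite sum_O. unfold tel. change_eq_R. simpl. field.
    - rewrite sum_Sn, IH. unfold tel. change plus with Rplus. rewrite S_INR.
      pose proof (pos_INR n). change_eq_R. field. lra. }
  change (is_lim_seq (sum_n tel) 1).
  apply (is_lim_seq_ext (fun n => 1 - / (INR n + 2))); [intros; symmetry; apply Hsum|].
  replace (Finite 1) with (Finite (1 - 0)) by (f_equal; ring).
  apply is_lim_seq_minus'; [apply is_lim_seq_const | apply is_lim_seq_inv_INR_plus].
Qed.

Lemma ex_series_le_tel (a : nat -> R) (C : R) :
  (forall k, Rabs (a k) <= C * tel k) -> ex_series a.
Proof.
  intros H. apply (ex_series_le a (fun k => C * tel k)); [exact H|].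
  exists (C * 1). apply (is_series_scal_l C tel 1), is_series_tel.
Qed.

Lemma Rabs_Series_le_tel (a : nat -> R) (C : R) :
  (forall k, Rabs (a k) <= C * tel k) -> Rabs (Series a) <= C.
Proof.
  intros H.
  assert (Habs : ex_series (fun k => Rabs (a k))).
  { apply ex_series_le_tel with C. intros k. rewrite Rabs_Rabsolu. apply H. }
  eapply Rle_trans; [apply Series_Rabs, Habs|].
  apply Rle_trans with (Series (fun k => C * tel k)).
  - apply Series_le; [intros k; split; [apply Rabs_pos | apply H]|].
    exists (C * 1). apply (is_series_scal_l C tel 1), is_series_tel.
  - rewrite Series_scal_l, (is_series_unique _ _ is_series_tel). lra.
Qed.

Lemma CV_radius_ge_of_is_pseries (a : nat -> R) (x l : R) :
  is_pseries a x l -> Rbar_le (Rabs x) (CV_radius a).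
Proof.
  intros H. apply Rbar_not_lt_le. intros Hlt. apply (CV_disk_outside a x Hlt).
  apply is_pseries_R in H. apply (ex_series_lim_0 (fun n => a n * x ^ n)). exists l. exact H.
Qed.

Lemma PSeries_coef_unique (a b : nat -> R) (r : R) : 0 < r ->
  Rbar_lt 0 (CV_radius a) -> Rbar_lt 0 (CV_radius b) ->
  (forall t, Rabs t < r -> PSeries a t = PSeries b t) -> forall n, a n = b n.
Proof.
  intros Hr Ha Hb Heq n.
  apply Rmult_eq_reg_r with (INR (fact n)); [|apply INR_fact_neq_0].
  rewrite <- (Derive_n_coef a n Ha), <- (Derive_n_coef b n Hb).
  apply Derive_n_ext_loc. exists (mkposreal r Hr). intros t Ht. apply Heq.
  replace t with (t - 0) by ring. exact Ht.
Qed.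

(** * Elementary trigonometric estimates *)

Lemma sin_ge_cubic (y : R) : 0 <= y <= 4 -> y - y ^ 3 / 6 <= sin y.
Proof.
  intros Hy. destruct (pre_sin_bound y 0 (proj1 Hy) (proj2 Hy)) as [H _].
  unfold sin_approx, sin_term in H. simpl in H. lra.
Qed.

Lemma cos_ge_quadratic (y : R) : -2 <= y <= 2 -> 1 - y ^ 2 / 2 <= cos y.
Proof.
  intros Hy. destruct (pre_cos_bound y 0 (proj1 Hy) (proj2 Hy)) as [H _].
  unfold cos_approx, cos_term in H. simpl in H. lra.
Qed.

Lemma Rabs_sin_sub_mul_cos (y : R) : 0 < y <= 2 -> Rabs (sin y - y * cos y) <= y ^ 3 / 2.
Proof.
  intros Hy.
  pose proof (sin_ge_cubic y ltac:(lra)). pose proof (sin_lt_x y ltac:(lra)).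
  pose proof (cos_ge_quadratic y ltac:(lra)). pose proof (COS_bound y).
  assert (y * cos y <= y) by nra.
  assert (y - y ^ 3 / 2 <= y * cos y) by (simpl in *; nra).
  apply Rabs_le. simpl in *. split; nra.
Qed.

Lemma Rabs_cot_sub_inv_le (y : R) : 0 < y <= 2 -> Rabs (cos y / sin y - / y) <= 2 * y.
Proof.
  intros Hy. pose proof (sin_ge_cubic y ltac:(lra)) as Hs.
  assert (Hs3 : y / 3 <= sin y) by (simpl in Hs; nra).
  replace (cos y / sin y - / y) with (- (sin y - y * cos y) / (y * sin y)) by (field; lra).
  unfold Rdiv. rewrite Rabs_mult, Rabs_Ropp, Rabs_inv, (Rabs_right (y * sin y)) by nra.
  apply Rle_trans with (y ^ 3 / 2 * / (y * (y / 3))).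
  - apply Rmult_le_compat; [apply Rabs_pos | left; apply Rinv_0_lt_compat; nra
      | apply Rabs_sin_sub_mul_cos; lra | apply Rinv_le_contravar; nra].
  - replace (y ^ 3 / 2 * / (y * (y / 3))) with (3 / 2 * y) by (field; lra). lra.
Qed.

Lemma Rabs_tan_div_sub1_le (t : R) : 0 < t <= 1 -> Rabs (tan t / t - 1) <= t ^ 2.
Proof.
  intros Ht. pose proof (cos_ge_quadratic t ltac:(lra)) as Hc.
  assert (Hc2 : 1 / 2 <= cos t) by (simpl in Hc; nra).
  unfold tan.
  replace (sin t / cos t / t - 1) with ((sin t - t * cos t) / (t * cos t)) by (field; lra).
  unfold Rdiv. rewrite Rabs_mult, Rabs_inv, (Rabs_right (t * cos t)) by nra.
  apply Rle_trans with (t ^ 3 / 2 * / (t * (1 / 2))).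
  - apply Rmult_le_compat; [apply Rabs_pos | left; apply Rinv_0_lt_compat; nra
      | apply Rabs_sin_sub_mul_cos; lra | apply Rinv_le_contravar; nra].
  - right. field. lra.
Qed.

Lemma mul_cos_lt_sin (x : R) : 0 < x <= 2 -> x * cos x < sin x.
Proof.
  intros Hx. pose proof (sin_ge_cubic x ltac:(lra)).
  destruct (pre_cos_bound x 0 ltac:(lra) ltac:(lra)) as [_ Hc].
  unfold cos_approx, cos_term in Hc. simpl in Hc.
  assert (x * cos x <= x * (1 - x * x / 2 + x * x * x * x / 24)) by (apply Rmult_le_compat_l; lra).
  assert (Hx3 : 0 < x * x * x) by (apply Rmult_lt_0_compat; nra).
  assert (x * x * x * (x * x) <= x * x * x * 4) by (apply Rmult_le_compat_l; nra).
  simpl in *. nra.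
Qed.

Lemma jordan_ineq (x : R) : 0 < x < PI / 2 -> 2 / PI * x < sin x.
Proof.
  intros Hx. pose proof PI_bounds.
  assert (Hdec : - (sin x / x) < - (sin (PI / 2) / (PI / 2))).
  { apply (incr_function_le (fun t => - (sin t / t)) x (PI / 2)
      (fun t => (sin t - t * cos t) / (t * t))); simpl; try lra.
    - intros t Ht1 Ht2. auto_derive; [lra|]. field. lra.
    - intros t Ht1 Ht2. apply Rdiv_lt_0_compat; [|nra].
      pose proof (mul_cos_lt_sin t ltac:(lra)). lra. }
  rewrite sin_PI2 in Hdec.
  apply Rmult_lt_reg_r with (/ x); [apply Rinv_0_lt_compat; lra|].
  replace (2 / PI * x * / x) with (1 / (PI / 2)) by (field; lra).
  unfold Rdiv in *. lra.
Qed.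

(** * Partial fractions of the cotangent *)

Fixpoint cot_psum (N : nat) (x : R) : R :=
  match N with
  | O => / x
  | S n => cot_psum n x + / (x + INR (S n)) + / (x - INR (S n))
  end.

Lemma cot_psum_shift (N : nat) (x : R) :
  cot_psum N (x + 1) = cot_psum N x - / (x - INR N) + / (x + INR N + 1).
Proof.
  induction N as [|n IH]; cbn [cot_psum].
  - simpl INR. replace (x - 0) with x by ring. replace (x + 0 + 1) with (x + 1) by ring. ring.
  - rewrite IH, S_INR.
    replace (x + 1 + (INR n + 1)) with (x + INR n + 1 + 1) by ring.
    replace (x + 1 - (INR n + 1)) with (x - INR n) by ring.
    replace (x + (INR n + 1)) with (x + INR n + 1) by ring.
    ring.
Qed.

Lemma Rinv_half (y : R) : / (y / 2) = 2 * / y.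
Proof. unfold Rdiv. rewrite Rinv_mult, Rinv_inv. ring. Qed.

Lemma cot_psum_dup (N : nat) (x : R) :
  cot_psum N (x / 2) + cot_psum N ((x + 1) / 2)
  = 2 * cot_psum (2 * N) x + 2 * / (x + INR (2 * N) + 1).
Proof.
  induction N as [|n IH].
  - change (2 * 0)%nat with 0%nat. cbn [cot_psum]. simpl INR. rewrite !Rinv_half.
    replace (x + 0 + 1) with (x + 1) by ring. ring.
  - replace (2 * S n)%nat with (S (S (2 * n))) by lia. cbn [cot_psum].
    assert (H2 : INR 2 = 2) by (simpl; ring).
    rewrite !S_INR. rewrite mult_INR, H2 in IH |- *.
    replace (x / 2 + (INR n + 1)) with ((x + 2 * INR n + 2) / 2) by field.
    replace (x / 2 - (INR n + 1)) with ((x - 2 * INR n - 2) / 2) by field.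
    replace ((x + 1) / 2 + (INR n + 1)) with ((x + 2 * INR n + 3) / 2) by field.
    replace ((x + 1) / 2 - (INR n + 1)) with ((x - 2 * INR n - 1) / 2) by field.
    replace (x + (2 * INR n + 1 + 1)) with (x + 2 * INR n + 2) by ring.
    replace (x - (2 * INR n + 1 + 1)) with (x - 2 * INR n - 2) by ring.
    replace (x + (2 * INR n + 1)) with (x + 2 * INR n + 1) by ring.
    replace (x - (2 * INR n + 1)) with (x - 2 * INR n - 1) by ring.
    replace (x + 2 * INR n + 2 + 1) with (x + 2 * INR n + 3) by ring.
    rewrite !Rinv_half. lra.
Qed.

Lemma cot_psum_opp (N : nat) (x : R) : cot_psum N (- x) = - cot_psum N x.
Proof.
  induction N as [|n IH]; cbn [cot_psum]; [apply Rinv_opp|].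
  rewrite IH.
  replace (- x + INR (S n)) with (- (x - INR (S n))) by ring.
  replace (- x - INR (S n)) with (- (x + INR (S n))) by ring.
  rewrite !Rinv_opp. ring.
Qed.

Lemma Rinv_add_Rinv_sub (x m : R) : x + m <> 0 -> x - m <> 0 ->
  / (x + m) + / (x - m) = 2 * x / ((x + m) * (x - m)).
Proof. intros. field. auto. Qed.

Lemma cot_psum_succ (N : nat) (x : R) :
  cot_psum (S N) x = / x + sum_n (fun k => / (x + INR (S k)) + / (x - INR (S k))) N.
Proof.
  induction N as [|n IH].
  - rewrite sum_O. cbn [cot_psum]. ring.
  - rewrite sum_Sn. change plus with Rplus. rewrite <- Rplus_assoc, <- IH. cbn [cot_psum]. ring.
Qed.

Lemma ex_series_cot_terms (x : R) :
  ex_series (fun k => / (x + INR (S k)) + / (x - INR (S k))).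
Proof.
  destruct (exists_INR_gt (2 * Rabs x + 1)) as [n0 Hn0].
  apply (ex_series_incr_n _ n0), ex_series_le_tel with (C := 8 * Rabs x).
  intros k. set (m := INR (S (n0 + k))).
  assert (Hm : m = INR n0 + INR k + 1) by (unfold m; rewrite S_INR, plus_INR; ring).
  pose proof (pos_INR k). pose proof (Rabs_pos x).
  pose proof (Rle_abs x). pose proof (Rle_abs (- x)).
  rewrite Rabs_Ropp in *.
  assert (Hp : 0 < x + m) by lra. assert (Hn : x - m < 0) by lra.
  rewrite Rinv_add_Rinv_sub by lra. unfold tel, Rdiv.
  rewrite Rabs_mult, Rabs_mult, Rabs_inv, (Rabs_right 2), (Rabs_left ((x + m) * (x - m))) by nra.
  apply Rle_trans with (2 * Rabs x * / ((INR k + 1) * (INR k + 2) / 4)).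
  - apply Rmult_le_compat_l; [lra|]. apply Rinv_le_contravar; [nra|].
    assert (x * x <= Rabs x * Rabs x) by nra. nra.
  - right. field. nra.
Qed.

Definition cot_sum (x : R) : R := real (Lim_seq (fun N => cot_psum N x)).

Lemma is_lim_seq_cot_psum (x : R) : is_lim_seq (fun N => cot_psum N x) (cot_sum x).
Proof.
  destruct (ex_series_cot_terms x) as [s Hs].
  assert (H : is_lim_seq (fun N => cot_psum N x) (/ x + s)).
  { apply is_lim_seq_incr_1.
    apply (is_lim_seq_ext
      (fun N => / x + sum_n (fun k => / (x + INR (S k)) + / (x - INR (S k))) N)).
    { intros N. symmetry. apply cot_psum_succ. }
    apply is_lim_seq_plus'; [apply is_lim_seq_const | apply Hs]. }
  unfold cot_sum. rewrite (is_lim_seq_unique _ _ H). exact H.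
Qed.

Lemma cot_sum_eq (x l : R) : is_lim_seq (fun N => cot_psum N x) l -> cot_sum x = l.
Proof.
  intros H. pose proof (is_lim_seq_unique _ _ (is_lim_seq_cot_psum x)) as H1.
  rewrite (is_lim_seq_unique _ _ H) in H1. congruence.
Qed.

Lemma cot_sum_shift (x : R) : cot_sum (x + 1) = cot_sum x.
Proof.
  apply cot_sum_eq. replace (cot_sum x) with (cot_sum x + 0 + 0) by ring.
  apply (is_lim_seq_ext (fun N => cot_psum N x + / (INR N + - x) + / (INR N + (x + 1)))).
  { intros N. rewrite cot_psum_shift.
    replace (x - INR N) with (- (INR N + - x)) by ring. rewrite Rinv_opp.
    replace (INR N + (x + 1)) with (x + INR N + 1) by ring. ring. }
  apply is_lim_seq_plus'; [apply is_lim_seq_plus'|];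
    [apply is_lim_seq_cot_psum | apply is_lim_seq_inv_INR_plus ..].
Qed.

Lemma cot_sum_opp (x : R) : cot_sum (- x) = - cot_sum x.
Proof.
  apply cot_sum_eq. apply (is_lim_seq_ext (fun N => - cot_psum N x)).
  { intros N. symmetry. apply cot_psum_opp. }
  apply (is_lim_seq_opp _ (cot_sum x)), is_lim_seq_cot_psum.
Qed.

Lemma cot_sum_dup (x : R) : cot_sum (x / 2) + cot_sum ((x + 1) / 2) = 2 * cot_sum x.
Proof.
  assert (H1 : is_lim_seq (fun N => cot_psum N (x / 2) + cot_psum N ((x + 1) / 2))
                 (cot_sum (x / 2) + cot_sum ((x + 1) / 2))).
  { apply is_lim_seq_plus'; apply is_lim_seq_cot_psum. }
  assert (H2 : is_lim_seq (fun N => cot_psum N (x / 2) + cot_psum N ((x + 1) / 2))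
                 (2 * cot_sum x + 2 * (/ 2 * 0))).
  { apply (is_lim_seq_ext (fun N => 2 * cot_psum (2 * N) x + 2 * (/ 2 * / (INR N + (x + 1) / 2)))).
    { intros N. rewrite cot_psum_dup, mult_INR. simpl INR. f_equal. f_equal.
      rewrite <- Rinv_mult. f_equal. field. }
    apply is_lim_seq_plus'.
    - apply (is_lim_seq_scal_l _ 2 (cot_sum x)).
      apply (is_lim_seq_subseq (fun N => cot_psum N x) _ (fun N => (2 * N)%nat));
        [apply eventually_subseq; intros; lia | apply is_lim_seq_cot_psum].
    - apply (is_lim_seq_scal_l _ 2 (/ 2 * 0)), (is_lim_seq_scal_l _ (/ 2) 0).
      apply is_lim_seq_inv_INR_plus. }
  pose proof (is_lim_seq_unique _ _ H1) as U1. rewrite (is_lim_seq_unique _ _ H2) in U1.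
  injection U1. lra.
Qed.

(* The bound [4|x|] is reached telescopically: [8|x| / ((2n-1)(2n+1))] is the increment of
   [4|x| - 4|x|/(2n+1)]. *)
Lemma cot_psum_near0 (N : nat) (x : R) : Rabs x <= 1 / 2 ->
  Rabs (cot_psum N x - / x) <= 4 * Rabs x - 4 * Rabs x / (2 * INR N + 1).
Proof.
  intros Hx. pose proof (Rabs_pos x). pose proof (Rle_abs x). pose proof (Rle_abs (- x)).
  rewrite Rabs_Ropp in *.
  induction N as [|n IH]; cbn [cot_psum].
  - simpl INR. replace (/ x - / x) with 0 by ring. rewrite Rabs_R0.
    replace (4 * Rabs x - 4 * Rabs x / (2 * 0 + 1)) with 0 by field. lra.
  - rewrite S_INR. set (m := INR n + 1). pose proof (pos_INR n).
    replace (cot_psum n x + / (x + m) + / (x - m) - / x)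
      with ((cot_psum n x - / x) + (/ (x + m) + / (x - m))) by ring.
    eapply Rle_trans; [apply Rabs_triang|].
    replace (4 * Rabs x - 4 * Rabs x / (2 * m + 1)) with
      ((4 * Rabs x - 4 * Rabs x / (2 * INR n + 1)) + 8 * Rabs x / ((2 * m - 1) * (2 * m + 1)))
      by (unfold m; field; lra).
    apply Rplus_le_compat; [exact IH|].
    rewrite Rinv_add_Rinv_sub by (unfold m in *; lra). unfold Rdiv.
    rewrite Rabs_mult, Rabs_mult, Rabs_inv, (Rabs_right 2), (Rabs_left ((x + m) * (x - m)))
      by (unfold m in *; nra).
    apply Rle_trans with (2 * Rabs x * / ((2 * m - 1) * (2 * m + 1) / 4)).
    + apply Rmult_le_compat_l; [lra|]. apply Rinv_le_contravar; unfold m in *; nra.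
    + right. field. unfold m. nra.
Qed.

Lemma cot_sum_near0 (x : R) : Rabs x <= 1 / 2 -> Rabs (cot_sum x - / x) <= 4 * Rabs x.
Proof.
  intros Hx. apply is_lim_seq_Rabs_le with (u := fun N => cot_psum N x - / x).
  - apply is_lim_seq_minus'; [apply is_lim_seq_cot_psum | apply is_lim_seq_const].
  - intros n. eapply Rle_trans; [apply cot_psum_near0, Hx|].
    pose proof (pos_INR n). pose proof (Rabs_pos x).
    assert (0 <= 4 * Rabs x / (2 * INR n + 1)) by (apply Rdiv_le_0_compat; lra). lra.
Qed.

Lemma cot_terms_lipschitz (m x z : R) : 2 <= m -> 0 <= x <= 1 -> 0 <= z <= 1 ->
  Rabs ((/ (x + m) + / (x - m)) - (/ (z + m) + / (z - m)))
  <= Rabs (x - z) * (2 / ((m - 1) * (m - 1))).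
Proof.
  intros Hm Hx Hz.
  pose proof (Rabs_inv_sub_le (x + m) (z + m) ((m - 1) * (m - 1)) ltac:(nra) ltac:(nra)) as H1.
  pose proof (Rabs_inv_sub_le (x - m) (z - m) ((m - 1) * (m - 1)) ltac:(nra) ltac:(nra)) as H2.
  replace (x + m - (z + m)) with (x - z) in H1 by ring.
  replace (x - m - (z - m)) with (x - z) in H2 by ring.
  replace (/ (x + m) + / (x - m) - (/ (z + m) + / (z - m)))
    with ((/ (x + m) - / (z + m)) + (/ (x - m) - / (z - m))) by ring.
  eapply Rle_trans; [apply Rabs_triang|]. unfold Rdiv in *. lra.
Qed.

Lemma cot_psum_lipschitz (d x z : R) (N : nat) : 0 < d <= 1 / 2 ->
  d <= x <= 1 - d -> d <= z <= 1 - d ->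
  Rabs (cot_psum (S N) x - cot_psum (S N) z)
  <= Rabs (x - z) * (2 / (d * d) + 5 - 4 / (INR N + 1)).
Proof.
  intros Hd Hx Hz. pose proof (Rabs_pos (x - z)).
  induction N as [|n IH].
  - cbn [cot_psum]. simpl INR. rewrite Rplus_0_l.
    pose proof (Rabs_inv_sub_le x z (d * d) ltac:(nra) ltac:(nra)) as H1.
    pose proof (Rabs_inv_sub_le (x + 1) (z + 1) 1 ltac:(lra) ltac:(nra)) as H2.
    pose proof (Rabs_inv_sub_le (x - 1) (z - 1) (d * d) ltac:(nra) ltac:(nra)) as H3.
    replace (x + 1 - (z + 1)) with (x - z) in H2 by ring.
    replace (x - 1 - (z - 1)) with (x - z) in H3 by ring.
    replace (/ x + / (x + 1) + / (x - 1) - (/ z + / (z + 1) + / (z - 1)))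
      with ((/ x - / z) + (/ (x + 1) - / (z + 1)) + (/ (x - 1) - / (z - 1))) by ring.
    eapply Rle_trans; [apply Rabs_triang|].
    eapply Rle_trans; [apply Rplus_le_compat_r, Rabs_triang|].
    replace (Rabs (x - z) * (2 / (d * d) + 5 - 4 / 1))
      with (Rabs (x - z) / (d * d) + Rabs (x - z) / 1 + Rabs (x - z) / (d * d)) by (field; lra).
    lra.
  - pose proof (pos_INR n). set (m := INR (S (S n))).
    assert (Hm : m = INR n + 2) by (unfold m; rewrite !S_INR; ring).
    pose proof (cot_terms_lipschitz m x z ltac:(lra) ltac:(lra) ltac:(lra)) as Hterm.
    replace (m - 1) with (INR n + 1) in Hterm by lra.
    replace (cot_psum (S (S n)) x - cot_psum (S (S n)) z)
      with ((cot_psum (S n) x - cot_psum (S n) z)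
            + ((/ (x + m) + / (x - m)) - (/ (z + m) + / (z - m))))
      by (unfold m; cbn [cot_psum]; ring).
    eapply Rle_trans; [apply Rabs_triang|].
    assert (Htel : 2 / ((INR n + 1) * (INR n + 1)) <= 4 / (INR n + 1) - 4 / (INR (S n) + 1)).
    { rewrite S_INR.
      replace (4 / (INR n + 1) - 4 / (INR n + 1 + 1)) with (4 / ((INR n + 1) * (INR n + 2)))
        by (field; lra).
      apply Rmult_le_reg_r with ((INR n + 1) * (INR n + 1) * (INR n + 2)); [nra|].
      field_simplify; nra. }
    assert (Rabs (x - z) * (2 / ((INR n + 1) * (INR n + 1)))
      <= Rabs (x - z) * (4 / (INR n + 1) - 4 / (INR (S n) + 1))) by (apply Rmult_le_compat_l; lra).
    lra.
Qed.

Lemma cot_sum_lipschitz (d x z : R) : 0 < d <= 1 / 2 -> d <= x <= 1 - d -> d <= z <= 1 - d ->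
  Rabs (cot_sum x - cot_sum z) <= (2 / (d * d) + 5) * Rabs (x - z).
Proof.
  intros Hd Hx Hz.
  apply is_lim_seq_Rabs_le with (u := fun N => cot_psum (S N) x - cot_psum (S N) z).
  - apply is_lim_seq_minus'; apply (is_lim_seq_incr_1 (fun N => cot_psum N _));
      apply is_lim_seq_cot_psum.
  - intros n. rewrite (Rmult_comm _ (Rabs _)).
    eapply Rle_trans; [apply (cot_psum_lipschitz d); auto|].
    apply Rmult_le_compat_l; [apply Rabs_pos|].
    pose proof (pos_INR n).
    assert (0 <= 4 / (INR n + 1)) by (apply Rdiv_le_0_compat; lra). lra.
Qed.

Definition cot_gap (x : R) : R := PI * (cos (PI * x) / sin (PI * x)) - cot_sum x.

Lemma cot_gap_shift (x : R) : cot_gap (x + 1) = cot_gap x.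
Proof.
  unfold cot_gap. rewrite cot_sum_shift.
  replace (PI * (x + 1)) with (PI * x + PI) by ring. rewrite neg_cos, neg_sin.
  unfold Rdiv. rewrite Rinv_opp. ring.
Qed.

Lemma cot_gap_opp (x : R) : cot_gap (- x) = - cot_gap x.
Proof.
  unfold cot_gap. rewrite cot_sum_opp. replace (PI * - x) with (- (PI * x)) by ring.
  rewrite cos_neg, sin_neg. unfold Rdiv. rewrite Rinv_opp. ring.
Qed.

Lemma cot_gap_0 : cot_gap 0 = 0.
Proof. pose proof (cot_gap_opp 0) as H. rewrite Ropp_0 in H. lra. Qed.

Lemma cot_gap_1 : cot_gap 1 = 0.
Proof. rewrite <- (Rplus_0_l 1), cot_gap_shift. apply cot_gap_0. Qed.

Lemma cot_gap_near0 (x : R) : Rabs x <= 1 / 2 -> Rabs (cot_gap x) <= 40 * Rabs x.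
Proof.
  pose proof PI_bounds.
  assert (Hpos : forall x, 0 < x <= 1 / 2 -> Rabs (cot_gap x) <= 40 * x).
  { intros y Hy. unfold cot_gap.
    assert (sin (PI * y) > 0) by (apply sin_gt_0; nra).
    replace (PI * (cos (PI * y) / sin (PI * y)) - cot_sum y) with
      (PI * (cos (PI * y) / sin (PI * y) - / (PI * y)) - (cot_sum y - / y))
      by (rewrite Rinv_mult; field; lra).
    eapply Rle_trans; [apply Rabs_triang|].
    rewrite Rabs_Ropp, Rabs_mult, (Rabs_right PI) by lra.
    pose proof (Rabs_cot_sub_inv_le (PI * y) ltac:(split; nra)) as Hcot.
    pose proof (cot_sum_near0 y ltac:(rewrite Rabs_right; lra)) as Hsum.
    rewrite (Rabs_right y) in Hsum by lra.
    apply (Rmult_le_compat_l PI) in Hcot; [|lra].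
    assert (PI * PI <= 16) by nra. assert (PI * (2 * (PI * y)) <= 32 * y) by nra. lra. }
  intros Hx. destruct (Rtotal_order x 0) as [Hn|[Hz|Hp]].
  - rewrite (Rabs_left x) in * by lra.
    rewrite <- (Ropp_involutive x) at 1. rewrite cot_gap_opp, Rabs_Ropp.
    apply Hpos. lra.
  - subst. rewrite cot_gap_0, Rabs_R0. lra.
  - rewrite (Rabs_right x) in * by lra. apply Hpos. lra.
Qed.

Lemma continuity_pt_cot_gap (c : R) : 0 <= c <= 1 -> continuity_pt cot_gap c.
Proof.
  intros Hc. pose proof PI_bounds.
  destruct (Req_dec c 0) as [->|H0].
  { apply continuity_pt_lipschitz with (d := 1 / 2) (K := 40); [lra|].
    intros x Hx. rewrite cot_gap_0, !Rminus_0_r. apply cot_gap_near0.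
    rewrite Rminus_0_r in Hx. lra. }
  destruct (Req_dec c 1) as [->|H1].
  { apply continuity_pt_lipschitz with (d := 1 / 2) (K := 40); [lra|].
    intros x Hx. rewrite cot_gap_1, Rminus_0_r.
    replace x with ((x - 1) + 1) at 1 by ring. rewrite cot_gap_shift. apply cot_gap_near0. lra. }
  apply continuity_pt_minus.
  - apply continuity_pt_filterlim.
    apply (ex_derive_continuous (fun x => PI * (cos (PI * x) / sin (PI * x)))).
    auto_derive. apply Rgt_not_eq, sin_gt_0; nra.
  - set (d := Rmin c (1 - c) / 2).
    pose proof (Rmin_l c (1 - c)). pose proof (Rmin_r c (1 - c)).
    assert (0 < Rmin c (1 - c)) by (apply Rmin_pos; lra).
    apply continuity_pt_lipschitz with (d := d) (K := 2 / (d * d) + 5); [unfold d; lra|].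
    intros x Hx. apply (cot_sum_lipschitz d); unfold d in *;
      [lra | apply Rabs_def2 in Hx; lra | lra].
Qed.

Lemma cot_gap_dup (x : R) : 0 < x < 1 -> cot_gap (x / 2) + cot_gap ((x + 1) / 2) = 2 * cot_gap x.
Proof.
  intros Hx. pose proof PI_bounds. unfold cot_gap.
  pose proof (cot_sum_dup x).
  set (a := PI * x / 2).
  assert (0 < a < PI / 2) by (unfold a; split; nra).
  assert (sin a > 0) by (apply sin_gt_0; lra). assert (cos a > 0) by (apply cos_gt_0; lra).
  replace (PI * (x / 2)) with a by (unfold a; field).
  replace (PI * ((x + 1) / 2)) with (a + PI / 2) by (unfold a; field).
  replace (PI * x) with (2 * a) by (unfold a; field).
  rewrite cos_plus, sin_plus, cos_PI2, sin_PI2, sin_2a, cos_2a.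
  assert (PI * (cos a / sin a) + PI * ((cos a * 0 - sin a * 1) / (sin a * 0 + cos a * 1))
    = 2 * (PI * ((cos a * cos a - sin a * sin a) / (2 * sin a * cos a)))) by (field; lra).
  lra.
Qed.

(* Herglotz's trick: at a positive maximum the duplication identity forces the value to
   persist at all dyadic fractions of the maximiser, contradicting [H t <= K t] near 0. *)
Lemma herglotz_nonpos (H : R -> R) (K : R) :
  (forall c, 0 <= c <= 1 -> continuity_pt H c) -> H 0 = 0 -> H 1 = 0 ->
  (forall y, 0 < y < 1 -> H (y / 2) + H ((y + 1) / 2) = 2 * H y) ->
  (forall t, 0 < t <= 1 / 2 -> H t <= K * t) ->
  forall y, 0 <= y <= 1 -> H y <= 0.
Proof.
  intros Hc H0 H1 Hdup Hlin y Hy.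
  destruct (continuity_ab_maj H 0 1 ltac:(lra) Hc) as [m [Hmax Hm]].
  enough (H m <= 0) by (pose proof (Hmax y Hy); lra).
  apply Rnot_lt_le. intros Hpos.
  assert (Hm' : 0 < m < 1).
  { split; apply Rnot_le_lt; intro Hle.
    - replace m with 0 in Hpos by lra. lra.
    - replace m with 1 in Hpos by lra. lra. }
  set (M := H m) in *.
  assert (Hhalf : forall k, 0 < m / 2 ^ k < 1 /\ H (m / 2 ^ k) = M).
  { induction k as [|k [Hk1 Hk2]].
    - replace (m / 2 ^ 0) with m by (simpl; field). auto.
    - replace (m / 2 ^ S k) with (m / 2 ^ k / 2) by (simpl; field; apply pow_nonzero; lra).
      pose proof (Hdup _ Hk1). pose proof (Hmax (m / 2 ^ k / 2) ltac:(lra)).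
      pose proof (Hmax ((m / 2 ^ k + 1) / 2) ltac:(lra)). split; lra. }
  destruct (exists_INR_gt (K / M)) as [n Hn].
  destruct (Hhalf (S n)) as [[Ht _] Heq].
  pose proof (INR_lt_pow2 n). pose proof (pow_lt 2 n ltac:(lra)).
  assert (Hs : m / 2 ^ S n = m / 2 / 2 ^ n) by (simpl; field; lra).
  pose proof (Hlin (m / 2 ^ S n)) as Hb. rewrite Heq, Hs in Hb.
  assert (m / 2 / 2 ^ n <= 1 / 2).
  { assert (0 < / 2 ^ n <= 1) by (split; [apply Rinv_0_lt_compat; lra |
      rewrite <- Rinv_1; apply Rinv_le_contravar; [lra | apply pow_R1_Rle; lra]]).
    unfold Rdiv at 1. nra. }
  specialize (Hb ltac:(rewrite Hs in Ht; lra)).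
  assert (HK : K < M * INR n).
  { apply (Rmult_lt_compat_r M) in Hn; [|lra].
    replace (K / M * M) with K in Hn by (field; lra). lra. }
  assert (HM : M * 2 ^ n <= K * (m / 2)).
  { apply (Rmult_le_compat_r (2 ^ n)) in Hb; [|lra].
    replace (K * (m / 2 / 2 ^ n) * 2 ^ n) with (K * (m / 2)) in Hb by (field; lra). exact Hb. }
  assert (M * INR n < M * 2 ^ n) by (apply Rmult_lt_compat_l; lra).
  assert (0 < K) by nra. assert (K * (m / 2) < K) by nra. lra.
Qed.

Lemma cot_gap_vanishes (y : R) : 0 <= y <= 1 -> cot_gap y = 0.
Proof.
  assert (Hlin : forall t, 0 < t <= 1 / 2 -> Rabs (cot_gap t) <= 40 * t).
  { intros t Ht. rewrite <- (Rabs_right t) at 2 by lra.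
    apply cot_gap_near0. rewrite Rabs_right; lra. }
  intros Hy. apply Rle_antisym.
  - apply (herglotz_nonpos cot_gap 40); auto using continuity_pt_cot_gap, cot_gap_0, cot_gap_1,
      cot_gap_dup.
    intros t Ht. pose proof (Hlin t Ht) as Hb. apply Rabs_le_between in Hb. lra.
  - enough (- cot_gap y <= 0) by lra.
    apply (herglotz_nonpos (fun x => - cot_gap x) 40).
    + intros c Hc. apply continuity_pt_opp, continuity_pt_cot_gap, Hc.
    + rewrite cot_gap_0. ring.
    + rewrite cot_gap_1. ring.
    + intros z Hz. pose proof (cot_gap_dup z Hz). lra.
    + intros t Ht. pose proof (Hlin t Ht) as Hb. apply Rabs_le_between in Hb. lra.
    + exact Hy.
Qed.

Theorem cot_partial_fractions (x : R) : 0 < x < 1 ->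
  cot_sum x = PI * (cos (PI * x) / sin (PI * x)).
Proof. intros Hx. pose proof (cot_gap_vanishes x ltac:(lra)) as H. unfold cot_gap in H. lra. Qed.

(** * Partial fractions of the tangent and the secant *)

Definition tan_term (x : R) (k : nat) : R := / (INR k + / 2 - x) - / (INR k + / 2 + x).

Definition sec_term (x : R) (k : nat) : R :=
  (-1) ^ k * (/ (INR k + / 2 + x) + / (INR k + / 2 - x)).

Lemma sum_n_tan_term (N : nat) (x : R) :
  sum_n (tan_term x) N = - cot_psum (S N) (x + / 2) + / (x + INR (S N) + / 2).
Proof.
  induction N as [|n IH].
  - rewrite sum_O. change_eq_R. unfold tan_term. cbn [cot_psum]. simpl INR.
    replace (x + / 2 - 1) with (- (0 + / 2 - x)) by field. rewrite Rinv_opp.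
    replace (x + / 2 + 1) with (x + 1 + / 2) by ring.
    replace (x + / 2) with (0 + / 2 + x) by ring. ring.
  - rewrite sum_Sn, IH. change plus with Rplus. change_eq_R. unfold tan_term. cbn [cot_psum].
    rewrite !S_INR.
    replace (x + / 2 - (INR n + 1 + 1)) with (- (INR n + 1 + / 2 - x)) by field.
    rewrite Rinv_opp.
    replace (x + / 2 + (INR n + 1 + 1)) with (x + (INR n + 1 + 1) + / 2) by ring.
    replace (x + (INR n + 1) + / 2) with (INR n + 1 + / 2 + x) by ring.
    ring.
Qed.

Lemma sum_n_sec_term (N : nat) (x : R) : - / 2 < x < / 2 ->
  sum_n (sec_term x) (S (2 * N))
  = (cot_psum (S N) ((x + / 2) / 2) - cot_psum (S N) ((x + 3 / 2) / 2)) / 2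
    - / (x + 2 * INR N + 5 / 2) + / (x + 2 * INR N + 7 / 2).
Proof.
  intros Hx. induction N as [|n IH].
  - rewrite sum_Sn, sum_O. change plus with Rplus. change_eq_R.
    unfold sec_term. cbn [cot_psum]. simpl. field. repeat split; lra.
  - replace (S (2 * S n)) with (S (S (S (2 * n)))) by lia.
    rewrite 2!sum_Sn, IH. change plus with Rplus. change_eq_R.
    replace (cot_psum (S (S n)) ((x + / 2) / 2)) with
      (cot_psum (S n) ((x + / 2) / 2) + / ((x + / 2) / 2 + INR (S (S n)))
       + / ((x + / 2) / 2 - INR (S (S n)))) by reflexivity.
    replace (cot_psum (S (S n)) ((x + 3 / 2) / 2)) with
      (cot_psum (S n) ((x + 3 / 2) / 2) + / ((x + 3 / 2) / 2 + INR (S (S n)))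
       + / ((x + 3 / 2) / 2 - INR (S (S n)))) by reflexivity.
    unfold sec_term.
    replace (S (S (2 * n))) with (2 * S n)%nat by lia. rewrite pow_1_even, pow_1_odd.
    repeat (rewrite S_INR || rewrite mult_INR). simpl INR. pose proof (pos_INR n).
    set (c1 := cot_psum (S n) ((x + / 2) / 2)). set (c2 := cot_psum (S n) ((x + 3 / 2) / 2)).
    field. repeat split; lra.
Qed.

Lemma is_series_tan_term (x : R) : - / 2 < x < / 2 ->
  is_series (tan_term x) (PI * (sin (PI * x) / cos (PI * x))).
Proof.
  intros Hx. pose proof PI_bounds.
  assert (Hc : cos (PI * x) > 0) by (apply cos_gt_0; nra).
  unfold is_series. change (is_lim_seq (sum_n (tan_term x)) (PI * (sin (PI * x) / cos (PI * x)))).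
  apply (is_lim_seq_ext (fun N => - cot_psum (S N) (x + / 2) + / (INR (S N) + (x + / 2)))).
  { intros N. rewrite sum_n_tan_term. f_equal. f_equal. ring. }
  replace (PI * (sin (PI * x) / cos (PI * x))) with (- cot_sum (x + / 2) + 0).
  - apply is_lim_seq_plus'.
    + apply (is_lim_seq_incr_1 (fun N => - cot_psum N (x + / 2))).
      apply (is_lim_seq_opp _ (cot_sum (x + / 2))), is_lim_seq_cot_psum.
    + apply (is_lim_seq_incr_1 (fun N => / (INR N + (x + / 2)))), is_lim_seq_inv_INR_plus.
  - rewrite cot_partial_fractions by lra.
    replace (PI * (x + / 2)) with (PI * x + PI / 2) by field.
    rewrite cos_plus, sin_plus, cos_PI2, sin_PI2. field. lra.
Qed.

Lemma PI_div_cos_eq_cot_sum (x : R) : - / 2 < x < / 2 ->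
  PI / cos (PI * x) = (cot_sum ((x + / 2) / 2) - cot_sum ((x + 3 / 2) / 2)) / 2.
Proof.
  intros Hx. pose proof PI_bounds.
  set (a := (x + / 2) / 2).
  replace ((x + 3 / 2) / 2) with (a + / 2) by (unfold a; field).
  rewrite !cot_partial_fractions by (unfold a; lra).
  assert (Hs : sin (PI * a) > 0) by (apply sin_gt_0; unfold a; nra).
  assert (Hc : cos (PI * a) > 0) by (apply cos_gt_0; unfold a; nra).
  replace (PI * (a + / 2)) with (PI * a + PI / 2) by field.
  replace (PI * x) with (2 * (PI * a) - PI / 2) by (unfold a; field).
  rewrite cos_minus, cos_plus, sin_plus, cos_PI2, sin_PI2, sin_2a.
  pose proof (sin2_cos2 (PI * a)) as Hsc. unfold Rsqr in Hsc.
  set (s := sin (PI * a)) in *. set (c := cos (PI * a)) in *.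
  replace (PI / (cos (2 * (PI * a)) * 0 + 2 * s * c * 1))
    with (PI * (s * s + c * c) / (2 * s * c)) by (rewrite Hsc; field; lra).
  field. lra.
Qed.

Lemma is_series_sec_term (x : R) : - / 2 < x < / 2 -> is_series (sec_term x) (PI / cos (PI * x)).
Proof.
  intros Hx. pose proof PI_bounds.
  pose proof (PI_div_cos_eq_cot_sum x Hx) as Hsec.
  set (a := (x + / 2) / 2) in *. set (b := (x + 3 / 2) / 2) in *.
  unfold is_series. change (is_lim_seq (sum_n (sec_term x)) (PI / cos (PI * x))).
  assert (Hodd : is_lim_seq (fun N => sum_n (sec_term x) (S (2 * N))) (PI / cos (PI * x))).
  { rewrite Hsec. replace ((cot_sum a - cot_sum b) / 2) with ((cot_sum a - cot_sum b) / 2 - 0 + 0)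
      by ring.
    apply (is_lim_seq_ext (fun N => (cot_psum (S N) a - cot_psum (S N) b) / 2
      - / (2 * INR N + (x + 5 / 2)) + / (2 * INR N + (x + 7 / 2)))).
    { intros N. rewrite sum_n_sec_term by exact Hx.
      replace (2 * INR N + (x + 5 / 2)) with (x + 2 * INR N + 5 / 2) by ring.
      replace (2 * INR N + (x + 7 / 2)) with (x + 2 * INR N + 7 / 2) by ring. reflexivity. }
    apply is_lim_seq_plus'; [apply is_lim_seq_minus'|]; [|apply is_lim_seq_inv_double_plus ..].
    apply (is_lim_seq_scal_r _ (/ 2) (cot_sum a - cot_sum b)).
    apply is_lim_seq_minus'; apply (is_lim_seq_incr_1 (fun N => cot_psum N _));
      apply is_lim_seq_cot_psum. }
  apply is_lim_seq_even_odd; [|exact Hodd].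
  apply (is_lim_seq_ext (fun N => sum_n (sec_term x) (S (2 * N))
    + (/ (2 * INR N + (3 / 2 + x)) + / (2 * INR N + (3 / 2 - x))))).
  { intros N. rewrite sum_Sn. change plus with Rplus. unfold sec_term. rewrite pow_1_odd.
    rewrite S_INR, mult_INR. replace (INR 2) with 2 by (simpl; ring).
    replace (2 * INR N + (3 / 2 + x)) with (2 * INR N + 1 + / 2 + x) by field.
    replace (2 * INR N + (3 / 2 - x)) with (2 * INR N + 1 + / 2 - x) by field. ring. }
  replace (PI / cos (PI * x)) with (PI / cos (PI * x) + (0 + 0)) by ring.
  apply is_lim_seq_plus'; [exact Hodd | apply is_lim_seq_plus'; apply is_lim_seq_inv_double_plus].
Qed.

Definition mu (k : nat) : R := (2 * INR k + 1) * PI / 2.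

Lemma mu_0 : mu 0 = PI / 2.
Proof. unfold mu. simpl. field. Qed.

Lemma mu_ge (k : nat) : PI / 2 <= mu k.
Proof. unfold mu. pose proof (pos_INR k). pose proof PI_bounds. nra. Qed.

Lemma mu_gt (k : nat) : 3 / 2 < mu k.
Proof. pose proof (mu_ge k). pose proof PI_bounds. lra. Qed.

Lemma mu_pow_lt (j k p : nat) : (j < k)%nat -> (0 < p)%nat -> mu j ^ p < mu k ^ p.
Proof.
  intros Hjk Hp. pose proof (mu_gt j). pose proof PI_bounds.
  apply pow_lt_compat_l; [|lia]. split; [lra|].
  unfold mu. apply lt_INR in Hjk. nra.
Qed.

Lemma inv_mu_sq_le_tel (k : nat) : / mu k ^ 2 <= tel k.
Proof.
  unfold tel. pose proof (pos_INR k). pose proof PI_bounds.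
  assert (Hm : (2 * INR k + 1) * (3 / 2) <= mu k) by (unfold mu; nra).
  apply Rinv_le_contravar; [nra|]. simpl. nra.
Qed.

Lemma mu_sq_sub_sq_pos (k : nat) (t : R) : Rabs t < PI / 2 -> 0 < mu k ^ 2 - t ^ 2.
Proof.
  intros Ht. pose proof (mu_ge k). pose proof (Rabs_pos t).
  rewrite <- (pow2_abs t). simpl. nra.
Qed.

Lemma powerRZ_two_div_PI (N : nat) :
  powerRZ (2 / PI) (Z.of_nat (2 * N) - 1) = mu 0 / mu 0 ^ (2 * N).
Proof.
  pose proof PI_bounds. rewrite powerRZ_pred by (apply Rgt_not_eq, Rdiv_lt_0_compat; lra).
  rewrite mu_0. replace (2 / PI) with (/ (PI / 2)) by (field; lra). rewrite pow_inv.
  field. split; [apply pow_nonzero|]; lra.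
Qed.

Lemma is_series_sec (y : R) : Rabs y < PI / 2 ->
  is_series (fun k => (-1) ^ k * 2 * mu k / (mu k ^ 2 - y ^ 2)) (sec y).
Proof.
  intros Hy. pose proof PI_bounds. apply Rabs_def2 in Hy.
  assert (Hx : - / 2 < y / PI < / 2) by (split; apply Rmult_lt_reg_r with PI; field_simplify; lra).
  replace (sec y) with (/ PI * (PI / cos (PI * (y / PI)))).
  - apply (is_series_ext (fun k => / PI * sec_term (y / PI) k)).
    + intros k. unfold sec_term, mu. pose proof (pos_INR k).
      change_eq_R. field. repeat split; try lra; nra.
    + apply (is_series_scal_l (/ PI) _ (PI / cos (PI * (y / PI)))), is_series_sec_term, Hx.
  - unfold sec. replace (PI * (y / PI)) with y by (field; lra).
    assert (cos y > 0) by (apply cos_gt_0; lra). field. lra.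
Qed.

Definition tan_div_term (t : R) (k : nat) : R := 2 / (mu k ^ 2 - t ^ 2).

Lemma is_series_tan_div_term (y : R) : 0 < y < PI / 2 -> is_series (tan_div_term y) (tan y / y).
Proof.
  intros Hy. pose proof PI_bounds.
  assert (Hx : - / 2 < y / PI < / 2) by (split; apply Rmult_lt_reg_r with PI; field_simplify; lra).
  replace (tan y / y) with (/ (PI * y) * (PI * (sin (PI * (y / PI)) / cos (PI * (y / PI))))).
  - apply (is_series_ext (fun k => / (PI * y) * tan_term (y / PI) k)).
    + intros k. unfold tan_div_term, tan_term, mu. pose proof (pos_INR k).
      change_eq_R. field. repeat split; try lra; nra.
    + apply (is_series_scal_l (/ (PI * y)) _ (PI * (sin (PI * (y / PI)) / cos (PI * (y / PI))))).
      apply is_series_tan_term, Hx.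
  - unfold tan. replace (PI * (y / PI)) with y by (field; lra).
    assert (cos y > 0) by (apply cos_gt_0; lra). field. lra.
Qed.

(** * Taylor coefficients of the secant *)

Definition sec_rem_term (M : nat) (t : R) (k : nat) : R :=
  (-1) ^ k * 2 * mu k / (mu k ^ (2 * M) * (mu k ^ 2 - t ^ 2)).

Definition sec_coef_term (M k : nat) : R := (-1) ^ k * 2 / mu k ^ (2 * M + 1).

Definition sec_rem (M : nat) (t : R) : R := Series (sec_rem_term M t).

Definition sec_coef (M : nat) : R := Series (sec_coef_term M).

Fixpoint sec_poly (M : nat) (t : R) : R :=
  match M with
  | O => 0
  | S m => sec_poly m t + sec_coef m * t ^ (2 * m)
  end.

Lemma sec_rem_term_rec (M : nat) (t : R) (k : nat) : Rabs t < PI / 2 ->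
  sec_rem_term M t k = sec_coef_term M k + t ^ 2 * sec_rem_term (S M) t k.
Proof.
  intros Ht. pose proof (mu_sq_sub_sq_pos k t Ht). pose proof (mu_gt k).
  unfold sec_rem_term, sec_coef_term. replace (2 * S M)%nat with (2 * M + 2)%nat by lia.
  rewrite !pow_add. assert (0 < mu k ^ (2 * M)) by (apply pow_lt; lra).
  field. repeat split; try lra; apply pow_nonzero; lra.
Qed.

Lemma is_series_sec_rem_term_0 (t : R) : Rabs t < PI / 2 -> is_series (sec_rem_term 0 t) (sec t).
Proof.
  intros Ht. apply (is_series_ext (fun k => (-1) ^ k * 2 * mu k / (mu k ^ 2 - t ^ 2))).
  - intros k. unfold sec_rem_term. simpl pow at 2. rewrite Rmult_1_l. reflexivity.
  - apply is_series_sec, Ht.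
Qed.

Lemma Rabs_sec_coef_term_le (M k : nat) : (1 <= M)%nat -> Rabs (sec_coef_term M k) <= 2 * tel k.
Proof.
  intros HM. pose proof (mu_gt k). pose proof (inv_mu_sq_le_tel k).
  assert (mu k ^ 2 <= mu k ^ (2 * M + 1)) by (apply Rle_pow; [lra | lia]).
  assert (0 < mu k ^ 2) by (apply pow_lt; lra).
  unfold sec_coef_term. rewrite Rabs_div by (apply pow_nonzero; lra).
  rewrite Rabs_mult, pow_1_abs, Rmult_1_l, Rabs_right, Rabs_right
    by (try apply Rle_ge, pow_le; lra).
  unfold Rdiv. apply Rmult_le_compat_l; [lra|].
  apply Rle_trans with (/ mu k ^ 2); [apply Rinv_le_contravar; lra | assumption].
Qed.

Lemma Rabs_sec_rem_term_le (M : nat) (t : R) (k : nat) : (1 <= M)%nat -> Rabs t <= 1 ->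
  Rabs (sec_rem_term M t k) <= 4 * tel k.
Proof.
  intros HM Ht. pose proof (mu_gt k). pose proof (inv_mu_sq_le_tel k).
  assert (Ht2 : t ^ 2 <= 1) by (rewrite <- pow2_abs; pose proof (Rabs_pos t); simpl; nra).
  assert (Hp : mu k ^ 2 <= mu k ^ (2 * M)) by (apply Rle_pow; [lra | lia]).
  assert (Hm2 : 2 <= mu k ^ 2) by (simpl; nra).
  set (D := mu k ^ (2 * M) * (mu k ^ 2 - t ^ 2)).
  assert (HD : mu k ^ 2 * (mu k ^ 2 / 2) <= D) by (apply Rmult_le_compat; lra).
  unfold sec_rem_term. fold D. rewrite Rabs_div by nra.
  rewrite Rabs_mult, Rabs_mult, pow_1_abs, (Rabs_right 2), (Rabs_right (mu k)), (Rabs_right D)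
    by nra.
  apply Rle_trans with (4 * / mu k ^ 2); [|apply Rmult_le_compat_l; lra].
  unfold Rdiv. apply Rle_trans with (1 * 2 * mu k * / (mu k ^ 2 * (mu k ^ 2 / 2))).
  - apply Rmult_le_compat_l; [lra|]. apply Rinv_le_contravar; nra.
  - replace (1 * 2 * mu k * / (mu k ^ 2 * (mu k ^ 2 / 2))) with (4 / mu k * / mu k ^ 2)
      by (field; lra).
    apply Rmult_le_compat_r; [left; apply Rinv_0_lt_compat; lra|].
    apply Rmult_le_reg_r with (mu k); [lra|]. field_simplify; lra.
Qed.

Lemma ex_series_sec_coef_term (M : nat) : ex_series (sec_coef_term M).
Proof.
  destruct M as [|M].
  - assert (Hh : Rabs (1 / 2) < PI / 2) by (rewrite Rabs_right; pose proof PI_bounds; lra).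
    apply (ex_series_ext (fun k => 1 * sec_rem_term 0 (1 / 2) k
                                   + (- (1 / 2) ^ 2) * sec_rem_term 1 (1 / 2) k)).
    { intros k. rewrite (sec_rem_term_rec 0 (1 / 2) k Hh). change_eq_R. ring. }
    apply ex_series_lincomb; [exists (sec (1 / 2)); apply is_series_sec_rem_term_0, Hh|].
    apply ex_series_le_tel with 4. intros k.
    apply Rabs_sec_rem_term_le; [lia | rewrite Rabs_right; lra].
  - apply ex_series_le_tel with 2. intros k. apply Rabs_sec_coef_term_le. lia.
Qed.

Lemma ex_series_sec_rem_term (M : nat) (t : R) : Rabs t < PI / 2 -> ex_series (sec_rem_term M t).
Proof.
  intros Ht. induction M as [|M IH]; [exists (sec t); apply is_series_sec_rem_term_0, Ht|].
  destruct (Req_dec t 0) as [->|H0].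
  - apply (ex_series_ext (sec_coef_term (S M))); [|apply ex_series_sec_coef_term].
    intros k. unfold sec_rem_term, sec_coef_term. pose proof (mu_gt k).
    rewrite pow_add, pow_1. change_eq_R. simpl (0 ^ 2).
    field. split; [lra | apply pow_nonzero; lra].
  - apply (ex_series_ext (fun k => / t ^ 2 * sec_rem_term M t k + (- / t ^ 2) * sec_coef_term M k)).
    { intros k. rewrite (sec_rem_term_rec M t k Ht). change_eq_R. field. exact H0. }
    apply ex_series_lincomb; [exact IH | apply ex_series_sec_coef_term].
Qed.

Lemma sec_rem_rec (M : nat) (t : R) : Rabs t < PI / 2 ->
  sec_rem M t = sec_coef M + t ^ 2 * sec_rem (S M) t.
Proof.
  intros Ht. unfold sec_rem, sec_coef.
  rewrite (Series_ext _ (fun k => 1 * sec_coef_term M k + t ^ 2 * sec_rem_term (S M) t k))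
    by (intros; rewrite sec_rem_term_rec by exact Ht; ring).
  apply is_series_unique. rewrite <- (Rmult_1_l (Series (sec_coef_term M))).
  apply is_series_lincomb; apply Series_correct;
    [apply ex_series_sec_coef_term | apply ex_series_sec_rem_term, Ht].
Qed.

Lemma sec_rem_0 (t : R) : Rabs t < PI / 2 -> sec_rem 0 t = sec t.
Proof. intros Ht. apply is_series_unique, is_series_sec_rem_term_0, Ht. Qed.

Lemma sec_expansion (M : nat) (t : R) : Rabs t < PI / 2 ->
  sec t = sec_poly M t + t ^ (2 * M) * sec_rem M t.
Proof.
  intros Ht. induction M as [|M IH]; [simpl; rewrite sec_rem_0 by exact Ht; ring|].
  rewrite IH, (sec_rem_rec M t Ht). cbn [sec_poly].
  replace (2 * S M)%nat with (2 * M + 2)%nat by lia. rewrite pow_add. ring.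
Qed.

Lemma Rabs_sec_rem_le (M : nat) (t : R) : (1 <= M)%nat -> Rabs t <= 1 -> Rabs (sec_rem M t) <= 4.
Proof.
  intros HM Ht. apply Rabs_Series_le_tel. intros k. apply Rabs_sec_rem_term_le; assumption.
Qed.

Lemma sec_rem_term_succ_div (M : nat) (t : R) (k : nat) : Rabs t < PI / 2 ->
  sec_rem_term (S M) t k = sec_coef_term M k / (mu k ^ 2 - t ^ 2).
Proof.
  intros Ht. pose proof (mu_sq_sub_sq_pos k t Ht). pose proof (mu_gt k).
  unfold sec_rem_term, sec_coef_term.
  replace (2 * S M)%nat with (S (2 * M + 1)) by lia. rewrite <- tech_pow_Rmult.
  field. repeat split; try lra. apply pow_nonzero. lra.
Qed.

Lemma sec_coef_0 : sec_coef 0 = 1.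
Proof.
  assert (H0 : Rabs 0 < PI / 2) by (rewrite Rabs_R0; pose proof PI_bounds; lra).
  pose proof (sec_rem_rec 0 0 H0) as H. rewrite sec_rem_0 in H by exact H0.
  unfold sec in H. rewrite cos_0, Rinv_1 in H. simpl in H. lra.
Qed.

Lemma sec_coef_lower (M : nat) : 2 / mu 0 ^ (2 * M + 1) - 2 / mu 1 ^ (2 * M + 1) <= sec_coef M.
Proof.
  replace (2 / mu 0 ^ (2 * M + 1) - 2 / mu 1 ^ (2 * M + 1))
    with (sec_coef_term M 0 + sec_coef_term M 1)
    by (unfold sec_coef_term; rewrite pow_O, pow_1; unfold Rdiv; ring).
  apply is_series_pairs_ge; [apply Series_correct, ex_series_sec_coef_term|].
  intros m. unfold sec_coef_term. rewrite pow_1_even, pow_1_odd.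
  pose proof (mu_pow_lt (2 * m) (S (2 * m)) (2 * M + 1) ltac:(lia) ltac:(lia)).
  pose proof (mu_gt (2 * m)). assert (0 < mu (2 * m) ^ (2 * M + 1)) by (apply pow_lt; lra).
  assert (/ mu (S (2 * m)) ^ (2 * M + 1) <= / mu (2 * m) ^ (2 * M + 1))
    by (apply Rinv_le_contravar; lra).
  unfold Rdiv. lra.
Qed.

Lemma sec_coef_pos (M : nat) : 0 < sec_coef M.
Proof.
  eapply Rlt_le_trans; [|apply sec_coef_lower].
  pose proof (mu_pow_lt 0 1 (2 * M + 1) ltac:(lia) ltac:(lia)).
  pose proof (mu_gt 0). assert (0 < mu 0 ^ (2 * M + 1)) by (apply pow_lt; lra).
  assert (/ mu 1 ^ (2 * M + 1) < / mu 0 ^ (2 * M + 1)) by (apply Rinv_lt_contravar; nra).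
  unfold Rdiv. lra.
Qed.

Lemma inv_mu_pow_le_sec_coef (n k : nat) : (2 <= k)%nat -> / mu k ^ (2 * n + 1) <= sec_coef (S n).
Proof.
  intros Hk. set (q := (2 * n + 1)%nat).
  pose proof (mu_gt 0). pose proof PI_bounds.
  assert (Hq0 : 0 < mu 0 ^ q) by (apply pow_lt; lra).
  assert (Hmu : forall j, mu j = (2 * INR j + 1) * mu 0)
    by (intros j; rewrite mu_0; unfold mu; field).
  assert (H3 : 3 * mu 0 ^ (q + 2) <= mu 1 ^ (q + 2)).
  { rewrite (Hmu 1%nat), Rpow_mult_distr. replace (2 * INR 1 + 1) with 3 by (simpl; ring).
    apply Rmult_le_compat_r; [apply pow_le; lra|].
    replace 3 with (3 ^ 1) at 1 by ring. apply Rle_pow; [lra | lia]. }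
  assert (H5 : 5 * mu 0 ^ q <= mu k ^ q).
  { apply Rle_trans with (mu 2 ^ q).
    - rewrite (Hmu 2%nat), Rpow_mult_distr. replace (2 * INR 2 + 1) with 5 by (simpl; ring).
      apply Rmult_le_compat_r; [lra|].
      replace 5 with (5 ^ 1) at 1 by ring. apply Rle_pow; [lra | unfold q; lia].
    - destruct (Nat.eq_dec k 2) as [->|]; [lra|]. left. apply mu_pow_lt; unfold q; lia. }
  pose proof (sec_coef_lower (S n)) as Hlow.
  replace (2 * S n + 1)%nat with (q + 2)%nat in Hlow by (unfold q; lia).
  assert (Hmu02 : mu 0 ^ 2 <= 4) by (rewrite mu_0; simpl; nra).
  rewrite !pow_add in H3, Hlow.
  apply Rle_trans with (/ (5 * mu 0 ^ q)); [apply Rinv_le_contravar; lra|].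
  eapply Rle_trans; [|exact Hlow].
  assert (0 < mu 0 ^ 2) by (apply pow_lt; lra).
  assert (0 < mu 0 ^ q * mu 0 ^ 2) by (apply Rmult_lt_0_compat; lra).
  assert (2 / (mu 1 ^ q * mu 1 ^ 2) <= 2 / (3 * (mu 0 ^ q * mu 0 ^ 2)))
    by (unfold Rdiv; apply Rmult_le_compat_l; [lra | apply Rinv_le_contravar; lra]).
  apply Rle_trans with (2 / (mu 0 ^ q * mu 0 ^ 2) - 2 / (3 * (mu 0 ^ q * mu 0 ^ 2))); [|lra].
  apply Rmult_le_reg_r with (mu 0 ^ q * mu 0 ^ 2 * 15); [nra|].
  field_simplify; nra.
Qed.

Lemma sec_poly_le (M : nat) (x y : R) : 0 <= x <= y -> 0 <= sec_poly M x <= sec_poly M y.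
Proof.
  intros Hxy. induction M as [|M IH]; cbn [sec_poly]; [lra|].
  pose proof (sec_coef_pos M). pose proof (pow_le x (2 * M) (proj1 Hxy)).
  pose proof (pow_incr x y (2 * M) Hxy). nra.
Qed.

Definition sec_taylor (n : nat) : R := if Nat.even n then sec_coef (Nat.div2 n) else 0.

Lemma sum_n_sec_taylor (M : nat) (t : R) :
  sum_n (fun k => sec_taylor k * t ^ k) (2 * M) = sec_poly (S M) t
  /\ sum_n (fun k => sec_taylor k * t ^ k) (S (2 * M)) = sec_poly (S M) t.
Proof.
  assert (Hodd : forall M, sum_n (fun k => sec_taylor k * t ^ k) (S (2 * M))
                           = sum_n (fun k => sec_taylor k * t ^ k) (2 * M)).
  { intros m. rewrite sum_Sn. unfold sec_taylor at 2.
    replace (Nat.even (S (2 * m))) with false by (rewrite Nat.even_succ, Nat.odd_mul; reflexivity).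
    change plus with Rplus. change_eq_R. ring. }
  induction M as [|M [IH _]].
  - rewrite Hodd. split; rewrite sum_O; unfold sec_taylor; simpl; ring.
  - rewrite Hodd. split; replace (2 * S M)%nat with (S (S (2 * M))) by lia;
      rewrite sum_Sn, Hodd, IH; cbn [sec_poly]; change plus with Rplus; change_eq_R;
      unfold sec_taylor; replace (S (S (2 * M))) with (2 * S M)%nat by lia;
      rewrite Nat.even_even, Nat.div2_double; reflexivity.
Qed.

Lemma is_pseries_sec_taylor (t : R) : Rabs t < 1 -> is_pseries sec_taylor t (sec t).
Proof.
  intros Ht. apply is_pseries_R.
  assert (Hlim : is_lim_seq (fun M => sec_poly (S M) t) (sec t)).
  { assert (Hs : Rabs t < PI / 2) by (pose proof PI_bounds; lra).
    apply (is_lim_seq_ext (fun M => sec t - (t ^ 2) ^ (S M) * sec_rem (S M) t)).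
    { intros M. rewrite (sec_expansion (S M) t Hs), <- pow_mult. ring. }
    replace (Finite (sec t)) with (Finite (sec t - 0)) by (f_equal; ring).
    apply is_lim_seq_minus'; [apply is_lim_seq_const|].
    assert (Hq : 0 <= t ^ 2 < 1) by (rewrite <- pow2_abs; pose proof (Rabs_pos t); simpl; nra).
    assert (Hgeom : is_lim_seq (fun M => 4 * (t ^ 2) ^ S M) 0).
    { replace (Finite 0) with (Finite (4 * 0)) by (f_equal; ring).
      apply (is_lim_seq_scal_l _ 4 0), (is_lim_seq_incr_1 (fun M => (t ^ 2) ^ M)), is_lim_seq_geom.
      rewrite Rabs_right; lra. }
    apply is_lim_seq_le_le with (u := fun M => - (4 * (t ^ 2) ^ S M))
                               (w := fun M => 4 * (t ^ 2) ^ S M); [|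
      replace (Finite 0) with (Rbar_opp 0) by (simpl; f_equal; ring);
      apply (is_lim_seq_opp _ 0), Hgeom | exact Hgeom].
    intros M. apply Rabs_le_between.
    rewrite Rabs_mult, (Rabs_right ((t ^ 2) ^ S M)), Rmult_comm by (apply Rle_ge, pow_le; lra).
    apply Rmult_le_compat_r; [apply pow_le; lra|].
    apply Rabs_sec_rem_le; [lia | lra]. }
  apply is_lim_seq_even_odd; (eapply is_lim_seq_ext; [|exact Hlim]);
    intros M; symmetry; apply (sum_n_sec_taylor M t).
Qed.

Lemma Euler_seq_coef (E : nat -> R) : is_Euler_seq E ->
  forall n, E n / INR (fact n) = sec_taylor n.
Proof.
  intros hE. pose proof PI_bounds.
  assert (HE : forall t, Rabs t < PI / 2 -> is_pseries (fun n => E n / INR (fact n)) t (sec t)).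
  { intros t Ht. apply is_pseries_R.
    apply (is_series_ext (fun n => E n * t ^ n / INR (fact n)));
      [intros n; change_eq_R; field; apply INR_fact_neq_0 | apply is_series_Reals, hE, Ht]. }
  assert (Hr : forall a l, is_pseries a (1 / 2) l -> Rbar_lt 0 (CV_radius a)).
  { intros a l Hal. eapply Rbar_lt_le_trans; [|apply (CV_radius_ge_of_is_pseries _ _ _ Hal)].
    simpl. rewrite Rabs_right; lra. }
  assert (Hhalf : Rabs (1 / 2) < 1) by (rewrite Rabs_right; lra).
  apply PSeries_coef_unique with 1;
    [lra | eapply Hr, HE; lra | eapply Hr, is_pseries_sec_taylor, Hhalf|].
  intros t Ht. rewrite (is_pseries_unique _ _ _ (HE t ltac:(lra))).
  symmetry. apply is_pseries_unique, is_pseries_sec_taylor, Ht.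
Qed.

Lemma Euler_seq_even_coef (E : nat -> R) : is_Euler_seq E ->
  forall M, E (2 * M)%nat / INR (fact (2 * M)) = sec_coef M.
Proof.
  intros hE M. rewrite (Euler_seq_coef E hE). unfold sec_taylor.
  rewrite Nat.even_even, Nat.div2_double. reflexivity.
Qed.

Lemma Euler_seq_abs_coef (E : nat -> R) : is_Euler_seq E ->
  forall N, Rabs (E (2 * N)%nat) / INR (fact (2 * N)) = sec_coef N.
Proof.
  intros hE N. pose proof (INR_fact_lt_0 (2 * N)).
  rewrite <- (Rabs_right (INR (fact (2 * N)))) by lra. rewrite <- Rabs_div by lra.
  rewrite Euler_seq_even_coef by exact hE. apply Rabs_right. left. apply sec_coef_pos.
Qed.

Lemma s_part_eq_sec_poly (E : nat -> R) : is_Euler_seq E ->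
  forall N x, s_part E N x = sec_poly N x.
Proof.
  intros hE N x. induction N as [|N IH]; [reflexivity|].
  cbn [s_part sec_poly]. rewrite IH, Euler_seq_abs_coef by exact hE. reflexivity.
Qed.

(** * The series of tan x / x *)

Definition tan_coef_term (k : nat) : R := 2 / mu k ^ 2.

Definition tan_rem_term (t : R) (k : nat) : R := 2 / (mu k ^ 2 * (mu k ^ 2 - t ^ 2)).

Lemma tan_div_term_split (t : R) (k : nat) : Rabs t < PI / 2 ->
  tan_div_term t k = tan_coef_term k + t ^ 2 * tan_rem_term t k.
Proof.
  intros Ht. pose proof (mu_sq_sub_sq_pos k t Ht). pose proof (mu_gt k).
  unfold tan_div_term, tan_coef_term, tan_rem_term. field. simpl. split; nra.
Qed.

Lemma ex_series_tan_coef_term : ex_series tan_coef_term.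
Proof.
  apply ex_series_le_tel with 2. intros k. pose proof (inv_mu_sq_le_tel k). pose proof (mu_gt k).
  unfold tan_coef_term. rewrite Rabs_right; [unfold Rdiv; lra|].
  apply Rle_ge, Rdiv_le_0_compat; [lra | apply pow_lt; lra].
Qed.

Lemma tan_rem_term_bounds (t : R) (k : nat) : Rabs t <= 1 -> 0 <= tan_rem_term t k <= 4 * tel k.
Proof.
  intros Ht. pose proof (inv_mu_sq_le_tel k). pose proof (mu_gt k).
  assert (Ht2 : t ^ 2 <= 1) by (rewrite <- pow2_abs; pose proof (Rabs_pos t); simpl; nra).
  assert (Hm2 : 2 <= mu k ^ 2) by (simpl; nra).
  unfold tan_rem_term. split; [apply Rdiv_le_0_compat; nra|].
  apply Rle_trans with (4 * / mu k ^ 2); [|lra].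
  unfold Rdiv. apply Rle_trans with (2 * / (mu k ^ 2 * (mu k ^ 2 / 2))).
  - apply Rmult_le_compat_l; [lra|]. apply Rinv_le_contravar; nra.
  - replace (2 * / (mu k ^ 2 * (mu k ^ 2 / 2))) with (4 * / mu k ^ 2 * / mu k ^ 2) by (field; lra).
    assert (/ mu k ^ 2 <= 1) by (rewrite <- Rinv_1; apply Rinv_le_contravar; lra).
    assert (0 < / mu k ^ 2) by (apply Rinv_0_lt_compat; lra). nra.
Qed.

Lemma ex_series_tan_rem_term (t : R) : 0 < t < PI / 2 -> ex_series (tan_rem_term t).
Proof.
  intros Ht. assert (Ha : Rabs t < PI / 2) by (rewrite Rabs_right; lra).
  apply (ex_series_ext (fun k => / t ^ 2 * tan_div_term t k + (- / t ^ 2) * tan_coef_term k)).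
  { intros k. rewrite tan_div_term_split by exact Ha. change_eq_R. field. lra. }
  apply ex_series_lincomb; [exists (tan t / t); apply is_series_tan_div_term, Ht|].
  apply ex_series_tan_coef_term.
Qed.

Lemma tan_div_decomp (t : R) : 0 < t < PI / 2 ->
  tan t / t = Series tan_coef_term + t ^ 2 * Series (tan_rem_term t).
Proof.
  intros Ht. assert (Ha : Rabs t < PI / 2) by (rewrite Rabs_right; lra).
  rewrite <- (is_series_unique _ _ (is_series_tan_div_term t Ht)).
  rewrite (Series_ext _ (fun k => 1 * tan_coef_term k + t ^ 2 * tan_rem_term t k))
    by (intros; rewrite tan_div_term_split by exact Ha; ring).
  apply is_series_unique. rewrite <- (Rmult_1_l (Series tan_coef_term)).
  apply is_series_lincomb; apply Series_correct;
    [apply ex_series_tan_coef_term | apply ex_series_tan_rem_term, Ht].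
Qed.

Lemma Series_tan_rem_term_nonneg (t : R) : 0 < t < PI / 2 -> 0 <= Series (tan_rem_term t).
Proof.
  intros Ht. apply (is_series_nonneg (tan_rem_term t));
    [apply Series_correct, ex_series_tan_rem_term, Ht|].
  intros k. pose proof (mu_sq_sub_sq_pos k t ltac:(rewrite Rabs_right; lra)). pose proof (mu_gt k).
  unfold tan_rem_term. apply Rdiv_le_0_compat; [lra|].
  apply Rmult_lt_0_compat; [apply pow_lt|]; lra.
Qed.

Lemma Series_tan_coef_term : Series tan_coef_term = 1.
Proof.
  apply eq_of_Rabs_sub_le_lin with 5. intros t Ht. pose proof PI_bounds.
  assert (Ht' : 0 < t < PI / 2) by lra.
  assert (HW : Rabs (Series (tan_rem_term t)) <= 4).
  { apply Rabs_Series_le_tel. intros k. destruct (tan_rem_term_bounds t k) as [H0 H4];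
      [rewrite Rabs_right; lra|]. rewrite Rabs_right; lra. }
  pose proof (tan_div_decomp t Ht') as Hdec. pose proof (Rabs_tan_div_sub1_le t Ht) as Htan.
  replace (Series tan_coef_term - 1)
    with ((tan t / t - 1) - t ^ 2 * Series (tan_rem_term t)) by lra.
  eapply Rle_trans; [apply Rabs_triang|]. rewrite Rabs_Ropp, Rabs_mult.
  assert (0 <= t ^ 2 <= t) by (simpl; split; nra). rewrite (Rabs_right (t ^ 2)) by lra.
  assert (t ^ 2 * Rabs (Series (tan_rem_term t)) <= t * 4)
    by (apply Rmult_le_compat; try lra; apply Rabs_pos).
  lra.
Qed.

Lemma tan_div_ge1 (t : R) : 0 < t < PI / 2 -> 1 <= tan t / t.
Proof.
  intros Ht. rewrite tan_div_decomp, Series_tan_coef_term by exact Ht.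
  pose proof (Series_tan_rem_term_nonneg t Ht). assert (0 <= t ^ 2) by (apply pow_le; lra). nra.
Qed.

(** * Bounds for the remainder and their sharpness *)

Lemma sec_rem_upper_succ (n : nat) (x : R) : 0 < x < PI / 2 ->
  sec_rem (S n) x < / mu 0 ^ (2 * n + 1) * (tan x / x).
Proof.
  intros Hx. assert (Ha : Rabs x < PI / 2) by (rewrite Rabs_right; lra).
  set (C := / mu 0 ^ (2 * n + 1)).
  assert (HC : 0 < C) by (apply Rinv_0_lt_compat, pow_lt; pose proof (mu_gt 0); lra).
  pose proof (is_series_lincomb _ _ _ _ C (-1) (is_series_tan_div_term x Hx)
    (Series_correct _ (ex_series_sec_rem_term (S n) x Ha))) as H.
  assert (Hterm : forall k, C * tan_div_term x k + -1 * sec_rem_term (S n) x k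
                            = (2 * C - sec_coef_term n k) / (mu k ^ 2 - x ^ 2)).
  { intros k. rewrite sec_rem_term_succ_div by exact Ha. unfold tan_div_term.
    pose proof (mu_sq_sub_sq_pos k x Ha). field. lra. }
  assert (Hcoef : forall k, sec_coef_term n k <= 2 / mu k ^ (2 * n + 1)).
  { intros k. unfold sec_coef_term, Rdiv. rewrite Rmult_assoc. apply neg1_pow_mul_le.
    pose proof (mu_gt k). apply Rmult_le_pos; [lra|]. left. apply Rinv_0_lt_compat, pow_lt. lra. }
  assert (H0 : 0 < C * (tan x / x) + -1 * sec_rem (S n) x); [|lra].
  apply (is_series_pos _ _ H).
  - intros k. rewrite Hterm. pose proof (mu_sq_sub_sq_pos k x Ha).
    apply Rdiv_le_0_compat; [|lra]. pose proof (Hcoef k).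
    assert (2 / mu k ^ (2 * n + 1) <= 2 * C); [|lra].
    destruct k as [|k]; [unfold C, Rdiv; lra|].
    pose proof (mu_pow_lt 0 (S k) (2 * n + 1) ltac:(lia) ltac:(lia)). pose proof (mu_gt 0).
    assert (0 < mu 0 ^ (2 * n + 1)) by (apply pow_lt; lra).
    unfold C, Rdiv. apply Rmult_le_compat_l; [lra|]. apply Rinv_le_contravar; lra.
  - rewrite Hterm. pose proof (mu_sq_sub_sq_pos 1 x Ha). apply Rdiv_lt_0_compat; [|lra].
    unfold sec_coef_term. rewrite pow_1.
    pose proof (mu_gt 1).
    assert (0 < 2 / mu 1 ^ (2 * n + 1)) by (apply Rdiv_lt_0_compat; [lra | apply pow_lt; lra]).
    unfold Rdiv in *. lra.
Qed.

Lemma sec_rem_upper (N : nat) (x : R) : 0 < x < PI / 2 ->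
  sec_rem N x < mu 0 / mu 0 ^ (2 * N) * (tan x / x).
Proof.
  intros Hx. pose proof (mu_gt 0) as Hm0. destruct N as [|n].
  - rewrite sec_rem_0 by (rewrite Rabs_right; lra). simpl pow. rewrite Rdiv_1_r, mu_0.
    pose proof (jordan_ineq x Hx). pose proof PI_bounds.
    assert (Hc : 0 < cos x) by (apply cos_gt_0; lra).
    unfold sec, tan. apply Rmult_lt_reg_r with (x * cos x); [nra|].
    replace (/ cos x * (x * cos x)) with x by (field; lra).
    replace (PI / 2 * (sin x / cos x / x) * (x * cos x)) with (PI / 2 * sin x) by (field; lra).
    apply Rmult_lt_reg_l with (2 / PI); [apply Rdiv_lt_0_compat; lra|].
    replace (2 / PI * (PI / 2 * sin x)) with (sin x) by (field; lra). lra.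
  - replace (mu 0 / mu 0 ^ (2 * S n)) with (/ mu 0 ^ (2 * n + 1)).
    + apply sec_rem_upper_succ, Hx.
    + replace (2 * S n)%nat with (S (2 * n + 1)) by lia. rewrite <- tech_pow_Rmult.
      field. split; [apply pow_nonzero|]; lra.
Qed.

Lemma sec_coef_term_le (n k : nat) : (1 <= k)%nat ->
  sec_coef_term (S n) k <= sec_coef (S n) * tan_coef_term k.
Proof.
  intros Hk. pose proof (sec_coef_pos (S n)). pose proof (mu_gt k).
  assert (0 < mu k ^ 2) by (apply pow_lt; lra).
  assert (Hp : 0 < mu k ^ (2 * n + 1)) by (apply pow_lt; lra).
  unfold sec_coef_term, tan_coef_term.
  destruct (Nat.Even_or_Odd k) as [[m ->]|[m ->]].
  - rewrite pow_1_even, Rmult_1_l.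
    replace (2 * S n + 1)%nat with (2 * n + 1 + 2)%nat by lia. rewrite pow_add.
    pose proof (inv_mu_pow_le_sec_coef n (2 * m) ltac:(lia)).
    replace (2 / (mu (2 * m) ^ (2 * n + 1) * mu (2 * m) ^ 2))
      with (/ mu (2 * m) ^ (2 * n + 1) * (2 / mu (2 * m) ^ 2)) by (field; lra).
    apply Rmult_le_compat_r; [apply Rdiv_le_0_compat|]; lra.
  - rewrite Nat.add_1_r, pow_1_odd. pose proof (mu_gt (S (2 * m))).
    assert (0 < 2 / mu (S (2 * m)) ^ (2 * S n + 1))
      by (apply Rdiv_lt_0_compat; [lra | apply pow_lt; lra]).
    assert (0 < 2 / mu (S (2 * m)) ^ 2) by (apply Rdiv_lt_0_compat; [lra | apply pow_lt; lra]).
    unfold Rdiv in *. nra.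
Qed.

Lemma sec_coef_mul_tan_rem_lt (n : nat) (x : R) : 0 < x < PI / 2 ->
  sec_coef (S n) * Series (tan_rem_term x) < sec_rem (S (S n)) x.
Proof.
  intros Hx. assert (Ha : Rabs x < PI / 2) by (rewrite Rabs_right; lra).
  set (A := sec_coef (S n)).
  set (v := fun k => sec_coef_term (S n) k - A * tan_coef_term k).
  set (w := fun k => / (mu k ^ 2 - x ^ 2)).
  assert (Hv : is_series v 0).
  { replace 0 with (1 * A + (- A) * 1) by ring.
    apply (is_series_ext (fun k => 1 * sec_coef_term (S n) k + (- A) * tan_coef_term k));
      [intros k; unfold v; change_eq_R; ring|].
    apply is_series_lincomb; [apply Series_correct, ex_series_sec_coef_term|].
    rewrite <- Series_tan_coef_term. apply Series_correct, ex_series_tan_coef_term. }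
  assert (Hvw : is_series (fun k => v k * w k)
                  (1 * sec_rem (S (S n)) x + (- A) * Series (tan_rem_term x))).
  { apply (is_series_ext (fun k => 1 * sec_rem_term (S (S n)) x k + (- A) * tan_rem_term x k)).
    - intros k. unfold v, w. rewrite sec_rem_term_succ_div by exact Ha.
      unfold tan_rem_term, tan_coef_term.
      pose proof (mu_sq_sub_sq_pos k x Ha). pose proof (mu_gt k). change_eq_R. field.
      simpl. split; nra.
    - apply is_series_lincomb; apply Series_correct;
        [apply ex_series_sec_rem_term, Ha | apply ex_series_tan_rem_term, Hx]. }
  assert (Hw : forall k, (1 <= k)%nat -> w k <= w 0%nat).
  { intros k Hk. unfold w. pose proof (mu_sq_sub_sq_pos 0 x Ha).
    pose proof (mu_pow_lt 0 k 2 ltac:(lia) ltac:(lia)). apply Rinv_le_contravar; lra. }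
  enough (0 < 1 * sec_rem (S (S n)) x + - A * Series (tan_rem_term x)) by lra.
  apply (is_series_weighted_pos v w _ Hv Hvw).
  - intros k Hk. split; [|apply Hw, Hk]. unfold v.
    pose proof (sec_coef_term_le n k Hk) as Hle. fold A in Hle. lra.
  - unfold v, sec_coef_term, tan_coef_term. rewrite pow_1.
    pose proof (sec_coef_pos (S n)). pose proof (mu_gt 1).
    assert (0 < 2 / mu 1 ^ (2 * S n + 1)) by (apply Rdiv_lt_0_compat; [|apply pow_lt]; lra).
    assert (0 < 2 / mu 1 ^ 2) by (apply Rdiv_lt_0_compat; [|apply pow_lt]; lra).
    unfold A. unfold Rdiv in *. nra.
  - unfold w. pose proof (mu_sq_sub_sq_pos 0 x Ha).
    pose proof (mu_pow_lt 0 1 2 ltac:(lia) ltac:(lia)). apply Rinv_lt_contravar; nra.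
Qed.

Lemma sec_rem_lower_succ (n : nat) (x : R) : 0 < x < PI / 2 ->
  sec_coef (S n) * (tan x / x) < sec_rem (S n) x.
Proof.
  intros Hx. rewrite (sec_rem_rec (S n) x), tan_div_decomp, Series_tan_coef_term
    by (exact Hx || (rewrite Rabs_right; lra)).
  pose proof (sec_coef_mul_tan_rem_lt n x Hx). assert (0 < x ^ 2) by (apply pow_lt; lra). nra.
Qed.

Lemma sec_rem_lower (N : nat) (x : R) : 0 < x < PI / 2 -> sec_coef N * (tan x / x) < sec_rem N x.
Proof.
  intros Hx. destruct N as [|n]; [|apply sec_rem_lower_succ, Hx].
  rewrite sec_coef_0, Rmult_1_l, sec_rem_0 by (rewrite Rabs_right; lra).
  pose proof (sin_lt_x x ltac:(lra)). pose proof PI_bounds.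
  assert (Hc : 0 < cos x) by (apply cos_gt_0; lra).
  unfold sec, tan. apply Rmult_lt_reg_r with (x * cos x); [nra|].
  replace (/ cos x * (x * cos x)) with x by (field; lra).
  replace (sin x / cos x / x * (x * cos x)) with (sin x) by (field; lra). lra.
Qed.

Lemma sec_rem_pos (N : nat) (x : R) : 0 < x < PI / 2 -> 0 < sec_rem N x.
Proof.
  intros Hx. pose proof (sec_rem_lower N x Hx). pose proof (sec_coef_pos N).
  pose proof (tan_div_ge1 x Hx). nra.
Qed.

Lemma sec_rem_lower_sharp (N : nat) (c : R) : sec_coef N < c ->
  exists x, 0 < x < PI / 2 /\ sec_rem N x <= c * (tan x / x).
Proof.
  intros Hc. pose proof PI_bounds. pose proof (sec_coef_pos N).
  set (x := Rmin (1 / 2) ((c - sec_coef N) / 4)).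
  assert (Hx : 0 < x <= 1 / 2) by (split; [apply Rmin_pos; lra | apply Rmin_l]).
  assert (Hxc : x <= (c - sec_coef N) / 4) by apply Rmin_r.
  exists x. split; [lra|].
  rewrite sec_rem_rec by (rewrite Rabs_right; lra).
  pose proof (Rabs_sec_rem_le (S N) x ltac:(lia) ltac:(rewrite Rabs_right; lra)) as HQ.
  apply Rabs_le_between in HQ. pose proof (tan_div_ge1 x ltac:(lra)).
  assert (x ^ 2 * sec_rem (S N) x <= x ^ 2 * 4) by (apply Rmult_le_compat_l; [apply pow_le|]; lra).
  assert (x ^ 2 * 4 <= c - sec_coef N) by (simpl; nra).
  nra.
Qed.

Lemma exists_cos_lt_near_PI2 (a e : R) : a < PI / 2 -> 0 < e ->
  exists x, Rmax a 0 < x < PI / 2 /\ cos x < e.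
Proof.
  intros Ha He. pose proof PI_bounds.
  assert (Hm : Rmax a 0 < PI / 2) by (apply Rmax_lub_lt; lra).
  set (h := Rmin e ((PI / 2 - Rmax a 0) / 2)).
  assert (Hh : 0 < h) by (apply Rmin_pos; lra).
  assert (Hhe : h <= e) by apply Rmin_l.
  assert (Hha : h <= (PI / 2 - Rmax a 0) / 2) by apply Rmin_r.
  exists (PI / 2 - h). split; [lra|]. rewrite cos_shift. pose proof (sin_lt_x h Hh). lra.
Qed.

Lemma sec_rem_upper_sharp_succ (n : nat) (c : R) : 0 < c -> c < / mu 0 ^ (2 * n + 1) ->
  exists x, 0 < x < PI / 2 /\ c * (tan x / x) <= sec_rem (S n) x.
Proof.
  intros Hc0 Hc. set (q := (2 * n + 1)%nat) in *. pose proof PI_bounds. pose proof mu_0.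
  assert (Hq : 0 < mu 0 ^ q) by (apply pow_lt; lra).
  set (d := 1 - c * mu 0 ^ q).
  assert (Hd : 0 < d).
  { unfold d. apply Rmult_lt_compat_r with (r := mu 0 ^ q) in Hc; [|lra].
    rewrite Rinv_l in Hc by lra. lra. }
  set (P := sec_poly (S n) (mu 0)).
  assert (HP : 0 <= P) by (apply (sec_poly_le (S n) (mu 0) (mu 0)); lra).
  destruct (exists_cos_lt_near_PI2 0 (d / (P + 1)) ltac:(lra) ltac:(apply Rdiv_lt_0_compat; lra))
    as [x [Hx Hcos]].
  rewrite Rmax_right in Hx by lra.
  exists x. split; [exact Hx|].
  assert (Hc1 : 0 < cos x) by (apply cos_gt_0; lra).
  assert (Hsec : P + 1 < d * sec x).
  { unfold sec. apply Rmult_lt_reg_r with (cos x); [lra|].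
    replace (d * / cos x * cos x) with d by (field; lra).
    apply Rmult_lt_compat_l with (r := P + 1) in Hcos; [|lra].
    replace ((P + 1) * (d / (P + 1))) with d in Hcos by (field; lra). lra. }
  assert (Hx2 : 0 < x ^ (2 * S n)) by (apply pow_lt; lra).
  apply Rmult_le_reg_l with (x ^ (2 * S n)); [exact Hx2|].
  replace (x ^ (2 * S n) * sec_rem (S n) x) with (sec x - sec_poly (S n) x)
    by (rewrite (sec_expansion (S n) x) by (rewrite Rabs_right; lra); ring).
  replace (x ^ (2 * S n) * (c * (tan x / x))) with (c * x ^ q * tan x)
    by (replace (2 * S n)%nat with (S q) by (unfold q; lia); simpl; field; lra).
  assert (Htan : 0 <= tan x <= sec x).
  { unfold tan, sec. pose proof (SIN_bound x). assert (0 < sin x) by (apply sin_gt_0; lra).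
    split; [apply Rdiv_le_0_compat; lra|]. unfold Rdiv. rewrite <- (Rmult_1_l (/ cos x)) at 2.
    apply Rmult_le_compat_r; [left; apply Rinv_0_lt_compat|]; lra. }
  assert (Hxq : x ^ q <= mu 0 ^ q) by (apply pow_incr; lra).
  assert (c * x ^ q * tan x <= c * mu 0 ^ q * sec x).
  { rewrite !Rmult_assoc. apply Rmult_le_compat_l; [lra|].
    apply Rmult_le_compat; [apply pow_le; lra | lra | exact Hxq | lra]. }
  destruct (sec_poly_le (S n) x (mu 0) ltac:(lra)) as [_ HPx]. fold P in HPx.
  unfold d in Hsec. lra.
Qed.

Lemma sec_rem_upper_sharp (N : nat) (c : R) : c < mu 0 / mu 0 ^ (2 * N) ->
  exists x, 0 < x < PI / 2 /\ c * (tan x / x) <= sec_rem N x.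
Proof.
  intros Hc. pose proof PI_bounds. pose proof mu_0.
  destruct (Rle_lt_dec c 0) as [Hc0|Hc0].
  { exists 1. split; [lra|]. pose proof (sec_rem_pos N 1 ltac:(lra)).
    pose proof (tan_div_ge1 1 ltac:(lra)). nra. }
  destruct N as [|n].
  - simpl pow in Hc. rewrite Rdiv_1_r in Hc.
    destruct (exists_cos_lt_near_PI2 c 1 ltac:(lra) ltac:(lra)) as [x [Hx _]].
    pose proof (Rmax_l c 0). pose proof (Rmax_r c 0).
    exists x. split; [lra|]. rewrite sec_rem_0 by (rewrite Rabs_right; lra).
    assert (Hcos : 0 < cos x) by (apply cos_gt_0; lra). pose proof (SIN_bound x).
    assert (0 < sin x) by (apply sin_gt_0; lra).
    unfold tan, sec. apply Rmult_le_reg_r with (x * cos x); [nra|].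
    replace (c * (sin x / cos x / x) * (x * cos x)) with (c * sin x) by (field; lra).
    replace (/ cos x * (x * cos x)) with x by (field; lra). nra.
  - apply sec_rem_upper_sharp_succ; [exact Hc0|].
    replace (/ mu 0 ^ (2 * n + 1)) with (mu 0 / mu 0 ^ (2 * S n)); [exact Hc|].
    replace (2 * S n)%nat with (S (2 * n + 1)) by lia. rewrite <- tech_pow_Rmult.
    field. split; [apply pow_nonzero|]; lra.
Qed.

Theorem theorem12 (E : nat -> R) (hE : is_Euler_seq E) (N : nat) :
  (forall x : R, 0 < x < PI / 2 ->
     Rabs (E (2 * N)%nat) / INR (fact (2 * N)) * powerRZ x (Z.of_nat (2 * N) - 1) * tan x
       < sec x - s_part E N x
     /\ sec x - s_part E N x
       < powerRZ (2 / PI) (Z.of_nat (2 * N) - 1) * powerRZ x (Z.of_nat (2 * N) - 1) * tan x)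
  /\
  (forall c : R, c > Rabs (E (2 * N)%nat) / INR (fact (2 * N)) ->
     exists x : R, 0 < x < PI / 2 /\
       ~ (c * powerRZ x (Z.of_nat (2 * N) - 1) * tan x < sec x - s_part E N x))
  /\
  (forall c : R, c < powerRZ (2 / PI) (Z.of_nat (2 * N) - 1) ->
     exists x : R, 0 < x < PI / 2 /\
       ~ (sec x - s_part E N x < c * powerRZ x (Z.of_nat (2 * N) - 1) * tan x)).
Proof.
  rewrite Euler_seq_abs_coef, powerRZ_two_div_PI by exact hE.
  assert (Hrem : forall x, 0 < x < PI / 2 -> sec x - s_part E N x = x ^ (2 * N) * sec_rem N x).
  { intros x Hx. rewrite s_part_eq_sec_poly by exact hE.
    rewrite (sec_expansion N x) by (rewrite Rabs_right; lra). ring. }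
  assert (Hform : forall c x, 0 < x ->
    c * powerRZ x (Z.of_nat (2 * N) - 1) * tan x = x ^ (2 * N) * (c * (tan x / x))).
  { intros c x Hx. rewrite powerRZ_pred by lra. field. lra. }
  assert (Hpow : forall x, 0 < x -> 0 < x ^ (2 * N)) by (intros; apply pow_lt; lra).
  split; [|split].
  - intros x Hx. rewrite Hrem, !Hform by lra.
    split; apply Rmult_lt_compat_l; auto using sec_rem_lower, sec_rem_upper; apply Hpow; lra.
  - intros c Hc. destruct (sec_rem_lower_sharp N c Hc) as [x [Hx Hle]].
    exists x. split; [exact Hx|]. rewrite Hrem, Hform by lra.
    apply Rle_not_lt, Rmult_le_compat_l; [left; apply Hpow; lra | exact Hle].
  - intros c Hc. destruct (sec_rem_upper_sharp N c Hc) as [x [Hx Hle]].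
    exists x. split; [exact Hx|]. rewrite Hrem, Hform by lra.
    apply Rle_not_lt, Rmult_le_compat_l; [left; apply Hpow; lra | exact Hle].
Qed.
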